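(* Under the hypotheses of the context, fix $\sigma>0$ and let $z=E+i\eta\in\mathcal D_\sigma$ with $E\ge E_--t^2$. Then for all $i$ and $p\ge2$, $$|V_i-\xi(z)|\ge c\,(t^2+\eta+t\,\mathrm{Im}\,m_{fc,t}(z)),\qquad\int\frac{d\mu_V(x)}{|x-\xi(z)|^p}\le C\frac{t+\sqrt{\kappa+\eta}}{(t^2+\mathrm{Im}\,\xi(z))^{p-1}},$$ and $t+\sqrt{\kappa+\eta}\le C(t+\mathrm{Im}\,m_{fc,t}(z))$.
   Context: $V=\mathrm{diag}(V_1\le\dots\le V_N)$ deterministic real and $\eta_*$-regular: for some $C_V$, $C_V^{-1}\frac{\eta}{\sqrt{|E|+\eta}}\le\mathrm{Im}\,m_V(E+i\eta)\le C_V\frac{\eta}{\sqrt{|E|+\eta}}$ for $-1\le E\le0$, $\eta_*\le\eta\le10$; $C_V^{-1}\sqrt{|E|+\eta}\le\mathrm{Im}\,m_V\le C_V\sqrt{|E|+\eta}$ for $0\le E\le1$, $\eta_*^{1/2}\sqrt{|E|}+\eta_*\le\eta\le10$; no $V_i\in[-1,-\eta_*]$; $\|V\|\le N^{C_V}$; $\eta_*=N^{-\phi_*}$, $0<\phi_*\le2/3$; $\mu_V=\frac1N\sum_i\delta_{V_i}$, $m_V(z)=\int\frac{d\mu_V(x)}{x-z}$. $t=N^{\omega-1/3}$ with $\phi_*/2>1/3-\omega>0$. $m_{fc,t}$ solves $m_{fc,t}(z)=m_V(z+tm_{fc,t}(z))$, $\xi(z)=z+tm_{fc,t}(z)$, $E_-$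 the left edge of the density of $m_{fc,t}$ in $[-3/4,3/4]$, $\kappa=|E-E_-|$. $\mathcal D_\sigma=\{E+i\eta:E_-\le E\le3/4,\,0<\eta\le10,\,\sqrt{\kappa+\eta}\ge N^\sigma/(N\eta)\}\cup\{E+i\eta:-3/4\le E\le E_-,\,N^{\sigma-2/3}\le\eta\le10\}$. *)

From Stdlib Require Import Reals Lra.
Open Scope R_scope.

Record Cx := mkC { Re : R; Im : R }.

Definition Cadd (z w : Cx) : Cx := mkC (Re z + Re w) (Im z + Im w).
Definition Csub (z w : Cx) : Cx := mkC (Re z - Re w) (Im z - Im w).
Definition Cscal (a : R) (z : Cx) : Cx := mkC (a * Re z) (a * Im z).
Definition Cnorm2 (z : Cx) : R := Re z * Re z + Im z * Im z.
Definition Cabs (z : Cx) : R := sqrt (Cnorm2 z).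
Definition Cinv (z : Cx) : Cx := mkC (Re z / Cnorm2 z) (- Im z / Cnorm2 z).
Definition RtoC (x : R) : Cx := mkC x 0.

Fixpoint fsum (N : nat) (f : nat -> R) : R :=
  match N with O => 0 | S n => fsum n f + f n end.
Definition Csum (N : nat) (f : nat -> Cx) : Cx :=
  mkC (fsum N (fun i => Re (f i))) (fsum N (fun i => Im (f i))).

(* Stieltjes transform of mu_V = (1/N) sum_i delta_{V_i}:
   m_V(z) = (1/N) sum_i 1/(V_i - z);  V_i indexed by i = 0..N-1 *)
Definition mV (N : nat) (V : nat -> R) (z : Cx) : Cx :=
  Cscal (/ INR N) (Csum N (fun i => Cinv (Csub (RtoC (V i)) z))).

(* int dmu_V(x) / |x - w|^p *)
Definition moment (N : nat) (V : nat -> R) (w : Cx) (p : R) : R :=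
  / INR N * fsum N (fun i => / Rpower (Cabs (Csub (RtoC (V i)) w)) p).

Definition eta_regular (N : nat) (V : nat -> R) (etas CV : R) : Prop :=
  (forall E eta, -1 <= E <= 0 -> etas <= eta <= 10 ->
     / CV * (eta / sqrt (Rabs E + eta)) <= Im (mV N V (mkC E eta)) /\
     Im (mV N V (mkC E eta)) <= CV * (eta / sqrt (Rabs E + eta))) /\
  (forall E eta, 0 <= E <= 1 -> sqrt etas * sqrt (Rabs E) + etas <= eta <= 10 ->
     / CV * sqrt (Rabs E + eta) <= Im (mV N V (mkC E eta)) /\
     Im (mV N V (mkC E eta)) <= CV * sqrt (Rabs E + eta)) /\
  (forall i, (i < N)%nat -> ~ (-1 <= V i <= - etas)) /\
  (forall i, (i < N)%nat -> Rabs (V i) <= Rpower (INR N) CV).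

Definition is_mfc (N : nat) (V : nat -> R) (t : R) (m : Cx -> Cx) : Prop :=
  forall z, 0 < Im z ->
    0 < Im (m z) /\ m z = mV N V (Cadd z (Cscal t (m z))).

Definition xi (t : R) (m : Cx -> Cx) (z : Cx) : Cx := Cadd z (Cscal t (m z)).

Definition density_pos (m : Cx -> Cx) (E : R) : Prop :=
  exists r, 0 < r /\
    forall eps, 0 < eps -> exists delta, 0 < delta /\
      forall eta, 0 < eta < delta -> Rabs (Im (m (mkC E eta)) / PI - r) < eps.

Definition is_left_edge (m : Cx -> Cx) (Em : R) : Prop :=
  (forall E, -3/4 <= E <= 3/4 -> density_pos m E -> Em <= E) /\
  (forall b, (forall E, -3/4 <= E <= 3/4 -> density_pos m E -> b <= E) -> b <= Em) /\
  (exists E, -3/4 <= E <= 3/4 /\ density_pos m E).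

Definition in_D (N : nat) (sigma Em : R) (z : Cx) : Prop :=
  let E := Re z in let eta := Im z in
  (Em <= E <= 3/4 /\ 0 < eta <= 10 /\
     sqrt (Rabs (E - Em) + eta) >= Rpower (INR N) sigma / (INR N * eta)) \/
  (-3/4 <= E <= Em /\ Rpower (INR N) (sigma - 2/3) <= eta <= 10).

(* The subordination equation [m = m_V(xi)], [Im xi = eta + t Im m], forces the stability
   bound [t mom2(xi) < 1], where [mom2(w)] averages [|V_i - w|^-2]. Together with the
   regularity of [m_V] this keeps [xi] at distance [>~ t^2] from every [V_i] and gives
   two-sided bounds on [Im m_V(xi)] in terms of [sqrt (Re xi + Im xi)] (right of 0) and
   [Im xi / sqrt (|Re xi| + Im xi)] (left of 0).
   The inverse map [w -> w - t m_V(w)] is a near-similarity around the reference point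
   [-L t^2 + i t^2], where [t mom2] is small; comparing with it pins the edge [E_-] within
   [O(t^2)] of the image of the reference point, since every point of positive density lies
   to its right and the density is positive [O(t^2)] further right. Knowing [E_-],
   [kappa + eta] is bounded by [|Re xi| + Im xi + t^2], which yields the three estimates. *)

From Stdlib Require Import Reals Lra Lia.
Open Scope R_scope.

Definition avg (N : nat) (f : nat -> R) : R := / INR N * fsum N f.

Lemma fsum_ext N f g : (forall i, (i < N)%nat -> f i = g i) -> fsum N f = fsum N g.
Proof.
  induction N as [|N IH]; simpl; intros H; [reflexivity|].
  rewrite IH by (intros; apply H; lia). now rewrite H by lia.
Qed.

Lemma fsum_le N f g : (forall i, (i < N)%nat -> f i <= g i) -> fsum N f <= fsum N g.
Proof.
  induction N as [|N IH]; simpl; intros H; [lra|].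
  assert (fsum N f <= fsum N g) by (apply IH; intros; apply H; lia).
  assert (f N <= g N) by (apply H; lia). lra.
Qed.

Lemma fsum_plus N f g : fsum N (fun i => f i + g i) = fsum N f + fsum N g.
Proof. induction N; simpl; [|rewrite IHN]; ring. Qed.

Lemma fsum_minus N f g : fsum N (fun i => f i - g i) = fsum N f - fsum N g.
Proof. induction N; simpl; [|rewrite IHN]; ring. Qed.

Lemma fsum_scal N c f : fsum N (fun i => c * f i) = c * fsum N f.
Proof. induction N; simpl; [|rewrite IHN]; ring. Qed.

Lemma fsum_const N c : fsum N (fun _ => c) = INR N * c.
Proof. induction N; [simpl; ring|]. cbn [fsum]. rewrite IHN, S_INR. ring. Qed.

Lemma fsum_nonneg N f : (forall i, (i < N)%nat -> 0 <= f i) -> 0 <= fsum N f.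
Proof. intros. rewrite <- (Rmult_0_r (INR N)), <- fsum_const. now apply fsum_le. Qed.

Lemma fsum_term N f k : (forall i, (i < N)%nat -> 0 <= f i) -> (k < N)%nat -> f k <= fsum N f.
Proof.
  induction N as [|N IH]; simpl; intros Hf Hk; [lia|].
  assert (0 <= f N) by (apply Hf; lia).
  destruct (Nat.eq_dec k N) as [->|Hne].
  - pose proof (fsum_nonneg N f (fun i Hi => Hf i ltac:(lia))). lra.
  - assert (f k <= fsum N f) by (apply IH; [intros; apply Hf|]; lia). lra.
Qed.

Lemma fsum_abs N f : Rabs (fsum N f) <= fsum N (fun i => Rabs (f i)).
Proof.
  induction N; simpl; [rewrite Rabs_R0; lra|].
  eapply Rle_trans; [apply Rabs_triang | lra].
Qed.

Section Averages.
Variable N : nat.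
Hypothesis HN : (1 <= N)%nat.

Lemma INR_pos : 0 < INR N.
Proof. apply lt_0_INR; lia. Qed.

Lemma Rinv_INR_pos : 0 < / INR N.
Proof. apply Rinv_0_lt_compat, INR_pos. Qed.

Lemma avg_le f g : (forall i, (i < N)%nat -> f i <= g i) -> avg N f <= avg N g.
Proof. intros H. apply Rmult_le_compat_l; [left; apply Rinv_INR_pos | now apply fsum_le]. Qed.

Lemma avg_const c : avg N (fun _ => c) = c.
Proof. unfold avg. rewrite fsum_const. field. apply Rgt_not_eq, INR_pos. Qed.

Lemma avg_nonneg f : (forall i, (i < N)%nat -> 0 <= f i) -> 0 <= avg N f.
Proof. intros. apply Rmult_le_pos; [left; apply Rinv_INR_pos | now apply fsum_nonneg]. Qed.

Lemma avg_abs f : Rabs (avg N f) <= avg N (fun i => Rabs (f i)).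
Proof.
  unfold avg. rewrite Rabs_mult, Rabs_right by (left; apply Rinv_INR_pos).
  apply Rmult_le_compat_l; [left; apply Rinv_INR_pos | apply fsum_abs].
Qed.

Lemma avg_term f k : (forall i, (i < N)%nat -> 0 <= f i) -> (k < N)%nat -> / INR N * f k <= avg N f.
Proof. intros. apply Rmult_le_compat_l; [left; apply Rinv_INR_pos | now apply fsum_term]. Qed.

End Averages.

Lemma avg_ext N f g : (forall i, (i < N)%nat -> f i = g i) -> avg N f = avg N g.
Proof. intros; unfold avg; now rewrite (fsum_ext N f g). Qed.

Lemma avg_plus N f g : avg N (fun i => f i + g i) = avg N f + avg N g.
Proof. unfold avg. rewrite fsum_plus. ring. Qed.

Lemma avg_minus N f g : avg N (fun i => f i - g i) = avg N f - avg N g.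
Proof. unfold avg. rewrite fsum_minus. ring. Qed.

Lemma avg_scal N c f : avg N (fun i => c * f i) = c * avg N f.
Proof. unfold avg. rewrite fsum_scal. ring. Qed.

Lemma Rsqr_ge0 x : 0 <= x * x.
Proof. apply Rle_0_sqr. Qed.

Lemma Rabs_le_between x y : Rabs x <= y -> -y <= x <= y.
Proof. unfold Rabs; destruct Rcase_abs; lra. Qed.

Lemma Rsqr_le_of_Rabs_le x y : Rabs x <= y -> x * x <= y * y.
Proof.
  intros. assert (Rabs x * Rabs x = x * x) by (rewrite <- Rabs_mult; apply Rabs_right, Rle_ge, Rsqr_ge0).
  pose proof (Rabs_pos x). nra.
Qed.

Lemma two_mult_le_weighted x y d : 0 < d -> 2 * x * y <= d * x * x + / d * y * y.
Proof.
  intros Hd.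
  assert (d * x * x + / d * y * y - 2 * x * y = / d * ((d * x - y) * (d * x - y))) by (field; lra).
  assert (0 <= / d * ((d * x - y) * (d * x - y)))
    by (apply Rmult_le_pos; [left; apply Rinv_0_lt_compat; auto | apply Rsqr_ge0]).
  lra.
Qed.

Lemma Rsqr_div_le_inv y D : 0 < D -> y * y <= D -> (y / D) * (y / D) <= / D.
Proof.
  intros HD Hy. replace ((y/D)*(y/D)) with ((y*y) * (/D * /D)) by (field; lra).
  apply Rle_trans with (D * (/D * /D)); [| right; field; lra].
  apply Rmult_le_compat_r; auto.
  assert (0 < /D) by (apply Rinv_0_lt_compat; auto). apply Rmult_le_pos; lra.
Qed.

Lemma Rabs_mult_le_weighted y1 y2 D1 D2 d : 0 < d -> y1 * y1 <= / D1 -> y2 * y2 <= / D2 ->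
  Rabs (y1 * y2) <= (d * / D1 + / d * / D2) / 2.
Proof.
  intros Hd H1 H2. rewrite Rabs_mult.
  pose proof (two_mult_le_weighted (Rabs y1) (Rabs y2) d Hd).
  assert (E1 : Rabs y1 * Rabs y1 = y1 * y1) by (rewrite <- Rabs_mult; apply Rabs_right; nra).
  assert (E2 : Rabs y2 * Rabs y2 = y2 * y2) by (rewrite <- Rabs_mult; apply Rabs_right; nra).
  assert (0 < / d) by (apply Rinv_0_lt_compat; auto).
  assert (d * Rabs y1 * Rabs y1 <= d * / D1) by (rewrite Rmult_assoc, E1; apply Rmult_le_compat_l; lra).
  assert (/d * Rabs y2 * Rabs y2 <= /d * / D2) by (rewrite Rmult_assoc, E2; apply Rmult_le_compat_l; lra).
  lra.
Qed.

Lemma sqrt_plus_le x y : 0 <= x -> 0 <= y -> sqrt (x + y) <= sqrt x + sqrt y.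
Proof.
  intros. pose proof (sqrt_pos x). pose proof (sqrt_pos y).
  apply Rsqr_incr_0_var; [unfold Rsqr | lra]. rewrite sqrt_sqrt by lra.
  replace ((sqrt x + sqrt y) * (sqrt x + sqrt y))
    with (sqrt x * sqrt x + sqrt y * sqrt y + 2 * (sqrt x * sqrt y)) by ring.
  rewrite !sqrt_sqrt by lra. pose proof (Rmult_le_pos _ _ H1 H2). lra.
Qed.

Lemma sqrt_plus3_le x y w : 0 <= x -> 0 <= y -> 0 <= w -> sqrt (x + y + w) <= sqrt x + sqrt y + sqrt w.
Proof. intros Hx Hy Hw. eapply Rle_trans; [apply sqrt_plus_le; lra|]. pose proof (sqrt_plus_le x y Hx Hy). lra. Qed.

Lemma div_sqrt_le_sqrt b c : 0 < b -> 0 <= c -> b / sqrt (c + b) <= sqrt b.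
Proof.
  intros. assert (0 < sqrt b) by (apply sqrt_lt_R0; lra).
  assert (sqrt b <= sqrt (c + b)) by (apply sqrt_le_1_alt; lra).
  unfold Rdiv. apply Rle_trans with (b * / sqrt b).
  - apply Rmult_le_compat_l; [lra | apply Rinv_le_contravar; lra].
  - right. rewrite <- (sqrt_sqrt b) at 1 by lra. field. lra.
Qed.

Lemma mult_sqrt_le_half x k : 0 <= x -> 0 <= k -> k * sqrt x <= (k * k + x) / 2.
Proof. intros. pose proof (Rsqr_ge0 (k - sqrt x)). pose proof (sqrt_sqrt x H). nra. Qed.

Lemma sqrt_mult_sqr_le K x : 0 <= K -> 0 <= x -> sqrt (K * x * x) <= (K + 1) * x.
Proof. intros. rewrite <- (sqrt_square ((K+1)*x)) by nra. apply sqrt_le_1_alt. nra. Qed.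

Lemma sqrt_scale_le c X : 1 <= c -> 0 <= X -> sqrt (c * X) <= c * sqrt X.
Proof.
  intros. rewrite sqrt_mult by lra. apply Rmult_le_compat_r; [apply sqrt_pos|].
  rewrite <- (sqrt_square c) at 2 by lra. apply sqrt_le_1_alt. nra.
Qed.

Lemma Rinv_Rpower_2_plus_le d rho q : 0 < rho <= d -> 0 <= q ->
  / Rpower d (2 + q) <= / (d * d) * / Rpower rho q.
Proof.
  intros Hd Hq. rewrite Rpower_plus. replace 2 with (1 + 1) by ring.
  rewrite Rpower_plus, Rpower_1 by lra.
  pose proof (Rle_Rpower_l rho d q Hq Hd). assert (0 < Rpower rho q) by (unfold Rpower; apply exp_pos).
  rewrite <- Rinv_mult. apply Rinv_le_contravar; [apply Rmult_lt_0_compat; nra|].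
  apply Rmult_le_compat_l; nra.
Qed.

Definition dist2 (v a b : R) : R := (v - a) * (v - a) + b * b.
Definition mom2 N (V : nat -> R) a b := avg N (fun i => / dist2 (V i) a b).
Definition imS N (V : nat -> R) a b := avg N (fun i => b / dist2 (V i) a b).
Definition reS N (V : nat -> R) a b := avg N (fun i => (V i - a) / dist2 (V i) a b).

Lemma dist2_pos v a b : 0 < b -> 0 < dist2 v a b.
Proof. intros Hb. unfold dist2. pose proof (Rsqr_ge0 (v-a)). nra. Qed.

Lemma Im_mV N V a b : Im (mV N V (mkC a b)) = imS N V a b.
Proof.
  unfold mV, imS, avg, Cscal, Csum. simpl. f_equal. apply fsum_ext. intros i _.
  unfold Cinv, Csub, RtoC, Cnorm2, dist2. simpl.
  replace ((0 - b) * (0 - b)) with (b * b) by ring. unfold Rdiv. ring.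
Qed.

Lemma Re_mV N V a b : Re (mV N V (mkC a b)) = reS N V a b.
Proof.
  unfold mV, reS, avg, Cscal, Csum. simpl. f_equal. apply fsum_ext. intros i _.
  unfold Cinv, Csub, RtoC, Cnorm2, dist2. simpl.
  replace ((0 - b) * (0 - b)) with (b * b) by ring. unfold Rdiv. ring.
Qed.

Lemma imS_mom2 N V a b : imS N V a b = b * mom2 N V a b.
Proof. unfold imS, mom2. rewrite <- avg_scal. apply avg_ext. intros. unfold Rdiv. ring. Qed.

Lemma mom2_nonneg N V a b : (1 <= N)%nat -> 0 < b -> 0 <= mom2 N V a b.
Proof. intros. apply avg_nonneg; auto. intros. left; apply Rinv_0_lt_compat, dist2_pos; auto. Qed.

Lemma Cabs_sub_dist2 v w : Cabs (Csub (RtoC v) w) = sqrt (dist2 v (Re w) (Im w)).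
Proof. unfold Cabs, Cnorm2, Csub, RtoC, dist2. simpl. f_equal. ring. Qed.

(* Two values of w -> w - t m_V(w) differ by (w1 - w2)(1 - t A + i t B), where A + i B
   averages (V_i - w1)^-1 (V_i - w2)^-1; [u*] and [v*] are the real and imaginary parts
   of these resolvents. *)
Section SubordinationDifference.
Variables (N : nat) (V : nat -> R) (t a1 b1 a2 b2 : R).
Hypotheses (HN : (1 <= N)%nat) (Ht : 0 < t) (Hb1 : 0 < b1) (Hb2 : 0 < b2).
Let u1 i := (V i - a1) / dist2 (V i) a1 b1.
Let v1 i := b1 / dist2 (V i) a1 b1.
Let u2 i := (V i - a2) / dist2 (V i) a2 b2.
Let v2 i := b2 / dist2 (V i) a2 b2.
Let A := avg N (fun i => u1 i * u2 i - v1 i * v2 i).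
Let B := avg N (fun i => u1 i * v2 i + v1 i * u2 i).

Lemma subord_re_diff :
  (a1 - t * reS N V a1 b1) - (a2 - t * reS N V a2 b2) = (a1 - a2) * (1 - t * A) + (b1 - b2) * (t * B).
Proof.
  assert (reS N V a1 b1 - reS N V a2 b2 = (a1 - a2) * A - (b1 - b2) * B).
  { transitivity (avg N (fun i => (a1-a2)*(u1 i*u2 i - v1 i*v2 i) - (b1-b2)*(u1 i*v2 i + v1 i*u2 i))).
    - unfold reS. rewrite <- avg_minus. apply avg_ext. intros i _. unfold u1, u2, v1, v2.
      pose proof (dist2_pos (V i) a1 b1 Hb1). pose proof (dist2_pos (V i) a2 b2 Hb2).
      unfold dist2 in *. field. lra.
    - rewrite avg_minus, !avg_scal. reflexivity. }
  nra.
Qed.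

Lemma subord_im_diff :
  (b1 - t * imS N V a1 b1) - (b2 - t * imS N V a2 b2) = (b1 - b2) * (1 - t * A) - (a1 - a2) * (t * B).
Proof.
  assert (imS N V a1 b1 - imS N V a2 b2 = (a1 - a2) * B + (b1 - b2) * A).
  { transitivity (avg N (fun i => (a1-a2)*(u1 i*v2 i + v1 i*u2 i) + (b1-b2)*(u1 i*u2 i - v1 i*v2 i))).
    - unfold imS. rewrite <- avg_minus. apply avg_ext. intros i _. unfold u1, u2, v1, v2.
      pose proof (dist2_pos (V i) a1 b1 Hb1). pose proof (dist2_pos (V i) a2 b2 Hb2).
      unfold dist2 in *. field. lra.
    - rewrite avg_plus, !avg_scal. reflexivity. }
  nra.
Qed.

Lemma resolvent_parts_sq i :
  u1 i * u1 i <= / dist2 (V i) a1 b1 /\ v1 i * v1 i <= / dist2 (V i) a1 b1 /\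
  u2 i * u2 i <= / dist2 (V i) a2 b2 /\ v2 i * v2 i <= / dist2 (V i) a2 b2.
Proof.
  pose proof (dist2_pos (V i) a1 b1 Hb1). pose proof (dist2_pos (V i) a2 b2 Hb2).
  unfold u1, v1, u2, v2. repeat split; apply Rsqr_div_le_inv; auto; unfold dist2;
    pose proof (Rsqr_ge0 (V i - a1)); pose proof (Rsqr_ge0 b1);
    pose proof (Rsqr_ge0 (V i - a2)); pose proof (Rsqr_ge0 b2); lra.
Qed.

Lemma t_avg_resolvent_product_le d f g : 0 < d -> t * mom2 N V a1 b1 <= 1 -> t * mom2 N V a2 b2 <= d * d ->
  (forall i, Rabs (f i) <= (d * / dist2 (V i) a1 b1 + / d * / dist2 (V i) a2 b2) / 2) ->
  (forall i, Rabs (g i) <= (d * / dist2 (V i) a1 b1 + / d * / dist2 (V i) a2 b2) / 2) ->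
  Rabs (t * avg N (fun i => f i + g i)) <= 2 * d.
Proof.
  intros Hd H1 H2 Hf Hg. rewrite Rabs_mult, (Rabs_right t) by lra.
  assert (Rabs (avg N (fun i => f i + g i)) <= d * mom2 N V a1 b1 + / d * mom2 N V a2 b2).
  { eapply Rle_trans; [apply avg_abs; auto|].
    replace (d * mom2 N V a1 b1 + / d * mom2 N V a2 b2) with
      (avg N (fun i => (d * / dist2 (V i) a1 b1 + / d * / dist2 (V i) a2 b2) / 2
                     + (d * / dist2 (V i) a1 b1 + / d * / dist2 (V i) a2 b2) / 2)).
    - apply avg_le; auto. intros i _. pose proof (Hf i); pose proof (Hg i).
      pose proof (Rabs_triang (f i) (g i)). lra.
    - unfold mom2. rewrite <- !avg_scal, <- avg_plus. apply avg_ext. intros; lra. }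
  assert (0 < / d) by (apply Rinv_0_lt_compat; auto).
  assert (t * (d * mom2 N V a1 b1 + / d * mom2 N V a2 b2) <= 2 * d).
  { replace (t * (d * mom2 N V a1 b1 + / d * mom2 N V a2 b2))
      with (d * (t * mom2 N V a1 b1) + / d * (t * mom2 N V a2 b2)) by ring.
    assert (d * (t * mom2 N V a1 b1) <= d * 1) by (apply Rmult_le_compat_l; lra).
    assert (/ d * (t * mom2 N V a2 b2) <= / d * (d * d)) by (apply Rmult_le_compat_l; lra).
    replace (/ d * (d * d)) with d in H4 by (field; lra). lra. }
  pose proof (Rabs_pos (avg N (fun i => f i + g i))). nra.
Qed.

Lemma t_A_t_B_abs_le d : 0 < d -> t * mom2 N V a1 b1 <= 1 -> t * mom2 N V a2 b2 <= d * d ->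
  Rabs (t * A) <= 2 * d /\ Rabs (t * B) <= 2 * d.
Proof.
  intros Hd H1 H2. split.
  - replace A with (avg N (fun i => u1 i * u2 i + (- (v1 i * v2 i))))
      by (unfold A; apply avg_ext; intros; ring).
    apply t_avg_resolvent_product_le; auto; intros i; destruct (resolvent_parts_sq i) as (? & ? & ? & ?).
    + now apply Rabs_mult_le_weighted.
    + rewrite Rabs_Ropp. now apply Rabs_mult_le_weighted.
  - apply t_avg_resolvent_product_le; auto; intros i; destruct (resolvent_parts_sq i) as (? & ? & ? & ?);
      now apply Rabs_mult_le_weighted.
Qed.

(* 1 - t A dominates the imaginary parts: A <= (avg u1^2 + avg u2^2)/2 because v1 v2 >= 0. *)
Lemma one_minus_t_A_ge : t * mom2 N V a1 b1 <= 1 -> t * mom2 N V a2 b2 <= 1 ->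
  t / 2 * avg N (fun i => v1 i * v1 i) <= 1 - t * A.
Proof.
  intros H1 H2.
  assert (E1 : mom2 N V a1 b1 = avg N (fun i => u1 i * u1 i) + avg N (fun i => v1 i * v1 i)).
  { rewrite <- avg_plus. apply avg_ext. intros i _. unfold u1, v1.
    pose proof (dist2_pos (V i) a1 b1 Hb1). unfold dist2 in *. field. lra. }
  assert (E2 : mom2 N V a2 b2 = avg N (fun i => u2 i * u2 i) + avg N (fun i => v2 i * v2 i)).
  { rewrite <- avg_plus. apply avg_ext. intros i _. unfold u2, v2.
    pose proof (dist2_pos (V i) a2 b2 Hb2). unfold dist2 in *. field. lra. }
  assert (HA : A <= (avg N (fun i => u1 i * u1 i) + avg N (fun i => u2 i * u2 i)) / 2).
  { unfold A. apply Rle_trans with (avg N (fun i => /2 * (u1 i * u1 i + u2 i * u2 i))).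
    - apply avg_le; auto. intros i _. assert (0 <= v1 i * v2 i).
      { unfold v1, v2. pose proof (dist2_pos (V i) a1 b1 Hb1). pose proof (dist2_pos (V i) a2 b2 Hb2).
        apply Rmult_le_pos; unfold Rdiv; apply Rmult_le_pos; try lra; left; apply Rinv_0_lt_compat; lra. }
      pose proof (Rsqr_ge0 (u1 i - u2 i)). lra.
    - right. rewrite avg_scal, avg_plus. field. }
  assert (0 <= avg N (fun i => v2 i * v2 i)) by (apply avg_nonneg; auto; intros; apply Rsqr_ge0).
  assert (0 <= avg N (fun i => v1 i * v1 i)) by (apply avg_nonneg; auto; intros; apply Rsqr_ge0).
  rewrite E1 in H1. rewrite E2 in H2. nra.
Qed.

Lemma subord_diff_near_identity : t * mom2 N V a1 b1 <= 1 -> t * mom2 N V a2 b2 <= 1/64 ->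
  exists P Q, (a1 - t * reS N V a1 b1) - (a2 - t * reS N V a2 b2) = (a1 - a2) * P + (b1 - b2) * Q /\
    3/4 <= P <= 5/4 /\ Rabs Q <= 1/4.
Proof.
  intros H1 H2. destruct (t_A_t_B_abs_le (1/8)) as [HA HB]; [lra|lra|lra|].
  exists (1 - t * A), (t * B). split; [exact subord_re_diff|].
  apply Rabs_le_between in HA. split; lra.
Qed.

Lemma subord_diff_coercive : t * mom2 N V a1 b1 <= 1 -> t * mom2 N V a2 b2 <= 1 ->
  exists P Q, (a1 - t * reS N V a1 b1) - (a2 - t * reS N V a2 b2) = (a1 - a2) * P + (b1 - b2) * Q /\
    (b1 - t * imS N V a1 b1) - (b2 - t * imS N V a2 b2) = (b1 - b2) * P - (a1 - a2) * Q /\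
    t / 2 * avg N (fun i => (b1 / dist2 (V i) a1 b1) * (b1 / dist2 (V i) a1 b1)) <= P.
Proof.
  intros H1 H2. exists (1 - t * A), (t * B).
  split; [exact subord_re_diff|]. split; [exact subord_im_diff|]. now apply one_minus_t_A_ge.
Qed.
End SubordinationDifference.

Lemma imS_le_inv N V a b : (1 <= N)%nat -> 0 < b -> imS N V a b <= / b.
Proof.
  intros HN Hb. unfold imS. rewrite <- (avg_const N HN (/ b)). apply avg_le; auto. intros i _.
  assert (0 < dist2 (V i) a b) by (apply dist2_pos; lra).
  assert (b * b <= dist2 (V i) a b) by (unfold dist2; pose proof (Rsqr_ge0 (V i - a)); lra).
  unfold Rdiv. apply Rle_trans with (b * / (b*b)).
  - apply Rmult_le_compat_l; [lra|]. apply Rinv_le_contravar; nra.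
  - right; field; lra.
Qed.

Lemma reS_abs_le N V a b lam : (1 <= N)%nat -> 0 < b -> 0 < lam ->
  Rabs (reS N V a b) <= (lam * mom2 N V a b + / lam) / 2.
Proof.
  intros HN Hb Hl. eapply Rle_trans; [apply avg_abs; auto|]. unfold mom2.
  replace ((lam * avg N (fun i => / dist2 (V i) a b) + / lam) / 2)
    with (avg N (fun i => (lam * / dist2 (V i) a b + / lam) / 2)).
  2:{ rewrite (avg_ext N _ (fun i => (/2*lam) * / dist2 (V i) a b + /2 * /lam)) by (intros; unfold Rdiv; ring).
      rewrite avg_plus, avg_scal, avg_const by auto. field. lra. }
  apply avg_le; auto. intros i _. set (y := V i - a). set (D := dist2 (V i) a b).
  assert (HD : 0 < D) by (apply dist2_pos; lra).
  assert (Hy : y * y <= D) by (unfold D, dist2, y; pose proof (Rsqr_ge0 b); lra).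
  assert (2 * Rabs y * lam <= lam * lam + D).
  { pose proof (Rsqr_ge0 (Rabs y - lam)).
    assert (Rabs y * Rabs y = y * y) by (rewrite <- Rabs_mult; apply Rabs_right, Rle_ge, Rsqr_ge0). nra. }
  unfold Rdiv. rewrite Rabs_mult, (Rabs_right (/D)) by (left; apply Rinv_0_lt_compat; lra).
  replace ((lam * / D + / lam) * / 2) with ((lam * lam + D) * / (2 * lam * D)) by (field; lra).
  replace (Rabs y * / D) with ((2 * Rabs y * lam) * / (2 * lam * D)) by (field; lra).
  apply Rmult_le_compat_r; auto. left; apply Rinv_0_lt_compat; nra.
Qed.

(* [m = m_V(xi)] with [Im xi = Im z + t Im m = Im z + t Im xi mom2(xi)], whence the
   stability bound [t mom2(xi) < 1]. *)
Lemma fc_subordination N V t m z : (1 <= N)%nat -> 0 < t -> is_mfc N V t m -> 0 < Im z ->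
  0 < Im (m z) /\ Im (m z) = imS N V (Re (xi t m z)) (Im (xi t m z)) /\
  Re (m z) = reS N V (Re (xi t m z)) (Im (xi t m z)) /\ 0 < Im (xi t m z) /\
  t * mom2 N V (Re (xi t m z)) (Im (xi t m z)) < 1 /\
  Re (xi t m z) = Re z + t * Re (m z) /\ Im (xi t m z) = Im z + t * Im (m z).
Proof.
  intros HN Ht Hm Hz. destruct (Hm z Hz) as [HM Heq].
  change (Cadd z (Cscal t (m z))) with (mkC (Re (xi t m z)) (Im (xi t m z))) in Heq.
  assert (Hre : Re (xi t m z) = Re z + t * Re (m z)) by reflexivity.
  assert (Him : Im (xi t m z) = Im z + t * Im (m z)) by reflexivity.
  assert (E1 : Im (m z) = imS N V (Re (xi t m z)) (Im (xi t m z))) by (rewrite Heq at 1; apply Im_mV).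
  assert (E2 : Re (m z) = reS N V (Re (xi t m z)) (Im (xi t m z))) by (rewrite Heq at 1; apply Re_mV).
  assert (Hb : 0 < Im (xi t m z)) by (rewrite Him; nra).
  repeat split; auto.
  rewrite imS_mom2 in E1. set (b := Im (xi t m z)) in *. set (I := mom2 N V (Re (xi t m z)) b) in *.
  destruct (Rlt_le_dec (t*I) 1); auto. nra.
Qed.

Lemma subord_im_lt_11 N V t a b eta : (1 <= N)%nat -> 0 < t <= 1 -> 0 < b -> eta <= 10 ->
  b = eta + t * imS N V a b -> b < 11.
Proof.
  intros HN Ht Hb He E. pose proof (imS_le_inv N V a b HN Hb).
  destruct (Rlt_le_dec b 11); auto.
  assert (/ b <= / 11) by (apply Rinv_le_contravar; lra).
  assert (t * imS N V a b <= 1 * (/ 11)).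
  { apply Rmult_le_compat; try lra. rewrite imS_mom2. apply Rmult_le_pos; [lra | now apply mom2_nonneg]. }
  lra.
Qed.

Lemma t_reS_abs_le N V t a b : (1 <= N)%nat -> 0 < t -> 0 < b -> t * mom2 N V a b <= 1 ->
  Rabs (t * reS N V a b) <= sqrt t.
Proof.
  intros HN Ht Hb HI. set (s := sqrt t). assert (Hs : 0 < s) by (apply sqrt_lt_R0; lra).
  assert (Hss : s * s = t) by (apply sqrt_sqrt; lra).
  pose proof (reS_abs_le N V a b s HN Hb Hs). rewrite Rabs_mult, (Rabs_right t) by lra.
  apply Rle_trans with (t * ((s * mom2 N V a b + / s) / 2)); [apply Rmult_le_compat_l; lra|].
  replace (t * ((s * mom2 N V a b + / s) / 2)) with ((s * (t * mom2 N V a b) + t / s) / 2) by (field; lra).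
  replace (t / s) with s by (rewrite <- Hss; field; lra). nra.
Qed.

Lemma div_INR_S_lt e0 d : 0 < e0 -> 0 < d -> exists N : nat, forall n, (n >= N)%nat -> e0 / INR (S n) < d.
Proof.
  intros He0 Hd. destruct (INR_archimed d e0 Hd) as [N HN]. exists N. intros n Hn.
  assert (INR N <= INR n) by (apply le_INR; lia). rewrite S_INR.
  assert (0 < INR N) by (destruct N; [simpl in HN; lra | apply lt_0_INR; lia]).
  apply Rmult_lt_reg_r with (INR n + 1); [lra|]. unfold Rdiv. rewrite Rmult_assoc, Rinv_l by lra. nra.
Qed.

Lemma div_INR_S_bounds e0 n : 0 < e0 -> 0 < e0 / INR (S n) <= e0.
Proof.
  intros. rewrite S_INR. pose proof (pos_INR n). split; [apply Rdiv_lt_0_compat; lra|].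
  unfold Rdiv. rewrite <- (Rmult_1_r e0) at 2. apply Rmult_le_compat_l; [lra|].
  rewrite <- Rinv_1. apply Rinv_le_contravar; lra.
Qed.

Section LipschitzRightLimit.
Variables (g : R -> R) (e0 K lo : R).
Hypotheses (He0 : 0 < e0) (HK : 0 <= K)
  (Hlip : forall x y, 0 < x <= e0 -> 0 < y <= e0 -> Rabs (g x - g y) <= K * Rabs (x - y))
  (Hlo : forall x, 0 < x <= e0 -> lo <= g x).

Let u n := g (e0 / INR (S n)).

Lemma lipschitz_samples_Cauchy : Cauchy_crit u.
Proof.
  intros eps Heps. destruct (div_INR_S_lt e0 (eps / (K + 1)) He0) as [N HN]; [apply Rdiv_lt_0_compat; lra|].
  exists N. intros n p Hn Hp. unfold Rdist, u.
  pose proof (div_INR_S_bounds e0 n He0). pose proof (div_INR_S_bounds e0 p He0).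
  eapply Rle_lt_trans; [apply Hlip; auto|].
  pose proof (HN n Hn). pose proof (HN p Hp).
  assert (Rabs (e0 / INR (S n) - e0 / INR (S p)) < eps / (K + 1)) by (apply Rabs_def1; lra).
  assert (eps / (K + 1) * (K + 1) = eps) by (field; lra).
  pose proof (Rabs_pos (e0 / INR (S n) - e0 / INR (S p))). nra.
Qed.

Lemma lipschitz_right_limit :
  exists l, lo <= l /\ forall eps, 0 < eps -> exists d, 0 < d /\ forall x, 0 < x < d -> Rabs (g x - l) < eps.
Proof.
  destruct (R_complete u lipschitz_samples_Cauchy) as [l Hl].
  exists l. split.
  - destruct (Rle_lt_dec lo l) as [|Hlt]; auto. exfalso.
    destruct (Hl (lo - l)) as [N HN]; [lra|]. specialize (HN N (Nat.le_refl N)). unfold Rdist, u in HN.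
    pose proof (Hlo (e0 / INR (S N)) (div_INR_S_bounds e0 N He0)). apply Rabs_def2 in HN. lra.
  - intros eps Heps. destruct (Hl (eps / 2)) as [N1 HN1]; [lra|].
    set (d := Rmin e0 (eps / (2 * (K + 1)))).
    assert (Hd : 0 < d) by (unfold d; apply Rmin_glb_lt; [lra | apply Rdiv_lt_0_compat; lra]).
    exists d. split; auto. intros x Hx.
    destruct (div_INR_S_lt e0 d He0 Hd) as [N2 HN2].
    set (n := (N1 + N2)%nat).
    pose proof (HN1 n ltac:(unfold n; lia)) as A1. unfold Rdist, u in A1.
    pose proof (HN2 n ltac:(unfold n; lia)) as A2. pose proof (div_INR_S_bounds e0 n He0) as A3.
    assert (d <= e0) by apply Rmin_l. assert (d <= eps / (2 * (K + 1))) by apply Rmin_r.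
    pose proof (Hlip x (e0 / INR (S n)) ltac:(lra) A3) as A4.
    assert (Rabs (x - e0 / INR (S n)) < d) by (apply Rabs_def1; lra).
    assert (K * d <= eps / 2).
    { apply Rle_trans with (K * (eps / (2 * (K + 1)))); [apply Rmult_le_compat_l; lra|].
      apply Rmult_le_reg_r with (2 * (K + 1)); [lra|].
      replace (K * (eps / (2 * (K + 1))) * (2 * (K + 1))) with (K * eps) by (field; lra). nra. }
    assert (K * Rabs (x - e0 / INR (S n)) <= K * d) by (apply Rmult_le_compat_l; lra).
    replace (g x - l) with ((g x - g (e0 / INR (S n))) + (g (e0 / INR (S n)) - l)) by ring.
    eapply Rle_lt_trans; [apply Rabs_triang | lra].
Qed.
End LipschitzRightLimit.

Definition ref_depth (CV : R) := 204800 * CV * CV + 2.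
Definition edge_lo (CV : R) := 2 * ((CV + 1) + (CV + 1) * (CV + 1)) + 3.
Definition edge_hi (CV : R) := 2 * ref_depth CV + 2.
Definition t_max (CV : R) := / (12800 * (ref_depth CV + edge_hi CV + edge_lo CV + 1)).
Definition sep (CV : R) := / (16 * (CV * CV + 1)).
Definition kr_const (CV : R) := 2 * ref_depth CV + 1 + edge_lo CV + edge_hi CV.
Definition kl_re_const (CV : R) := ref_depth CV + 2 * edge_lo CV + 3.
Definition kl_const (CV : R) := 2 * ref_depth CV + 2 * edge_lo CV + edge_hi CV + 1.
Definition kappa_const (CV : R) :=
  (kr_const CV + 2 + 8 * CV) + (kl_const CV + 4) + 4 * CV * (kl_re_const CV + 2) * (kl_const CV + 2).
Definition re_const (CV : R) := 2 * edge_lo CV + 2 * edge_hi CV + 1.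
Definition im_m_const (CV : R) :=
  2 * ((CV + 1) * (re_const CV + 2) + 4 * (CV + 1) * (CV + 1) + 4 * (CV + 1)).
Definition fc_const (CV p : R) := kappa_const CV + 2 * (im_m_const CV + 1) / Rpower (sep CV) (p - 2).

Section Constants.
Variable CV : R.
Hypothesis HCV : 0 < CV.

Lemma edge_constants_bounds : 2 <= ref_depth CV /\ 3 <= edge_lo CV /\ 0 < edge_hi CV.
Proof. unfold edge_hi, edge_lo, ref_depth. pose proof (Rsqr_ge0 CV). pose proof (Rsqr_ge0 (CV+1)). nra. Qed.

Lemma kappa_consts_ge0 : 0 <= kr_const CV /\ 0 <= kl_re_const CV /\ 0 <= kl_const CV.
Proof. destruct edge_constants_bounds as (? & ? & ?). unfold kr_const, kl_re_const, kl_const. lra. Qed.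

Lemma kappa_const_ge1 : 1 <= kappa_const CV.
Proof.
  destruct kappa_consts_ge0 as (? & ? & ?). unfold kappa_const.
  assert (0 <= 4 * CV * (kl_re_const CV + 2) * (kl_const CV + 2)) by (repeat apply Rmult_le_pos; lra). lra.
Qed.

Lemma im_m_const_ge0 : 0 <= im_m_const CV.
Proof.
  destruct edge_constants_bounds as (? & ? & ?). unfold im_m_const, re_const. pose proof (Rsqr_ge0 (CV+1)).
  assert (0 <= (CV + 1) * (2 * edge_lo CV + 2 * edge_hi CV + 1 + 2)) by (apply Rmult_le_pos; lra). lra.
Qed.

End Constants.

Lemma sep_pos CV : 0 < sep CV.
Proof. unfold sep. apply Rinv_0_lt_compat. pose proof (Rsqr_ge0 CV). lra. Qed.

Section Regularity.
Variables (N : nat) (V : nat -> R) (CV etas : R).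
Hypotheses (HN : (1 <= N)%nat) (HCV : 0 < CV) (Hreg : eta_regular N V etas CV) (Hetas : 0 < etas).

Lemma imS_regular_left a b : -1 <= a <= 0 -> etas <= b <= 10 ->
  / CV * (b / sqrt (Rabs a + b)) <= imS N V a b /\ imS N V a b <= CV * (b / sqrt (Rabs a + b)).
Proof. intros. rewrite <- Im_mV. now apply Hreg. Qed.

Lemma imS_regular_right a b : 0 <= a <= 1 -> sqrt etas * sqrt a + etas <= b <= 10 ->
  / CV * sqrt (a + b) <= imS N V a b /\ imS N V a b <= CV * sqrt (a + b).
Proof.
  intros Ha Hb. rewrite <- Im_mV. destruct Hreg as (_ & Hright & _).
  pose proof (Hright a b Ha) as H. rewrite Rabs_right in H by lra. now apply H.
Qed.

Lemma mom2_antitone a b b' : 0 < b <= b' -> mom2 N V a b' <= mom2 N V a b.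
Proof.
  intros. apply avg_le; auto. intros i _.
  apply Rinv_le_contravar; [apply dist2_pos; lra | unfold dist2; nra].
Qed.

(* dist2 (V i) a b <= 2 dist2 (V i) E0 r as soon as |(a + i b) - E0| <= r. *)
Lemma mom2_le_twice a b E0 r : 0 < b -> 0 < r -> (E0 - a) * (E0 - a) + b * b <= r * r ->
  mom2 N V E0 r <= 2 * mom2 N V a b.
Proof.
  intros. unfold mom2. rewrite <- avg_scal. apply avg_le; auto. intros i _.
  assert (0 < dist2 (V i) a b) by (apply dist2_pos; lra).
  assert (0 < dist2 (V i) E0 r) by (apply dist2_pos; lra).
  assert (dist2 (V i) a b <= 2 * dist2 (V i) E0 r).
  { unfold dist2. pose proof (Rsqr_ge0 (V i - E0 - (E0 - a))). pose proof (Rsqr_ge0 b).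
    assert (2*((V i-E0)*(V i-E0) + r*r) - ((V i-a)*(V i-a)+b*b)
            = ((V i-E0)-(E0-a))*((V i-E0)-(E0-a)) + 2*(r*r - (E0-a)*(E0-a) - b*b) + b*b) by ring.
    lra. }
  replace (2 * / dist2 (V i) a b) with (/ (dist2 (V i) a b / 2)) by (field; lra).
  apply Rinv_le_contravar; lra.
Qed.

Lemma imS_large_im a b : 10 <= b -> 10 / b * imS N V a 10 <= imS N V a b.
Proof.
  intros. rewrite !imS_mom2.
  assert (100 / (b * b) * mom2 N V a 10 <= mom2 N V a b).
  { unfold mom2. rewrite <- avg_scal. apply avg_le; auto. intros i _.
    assert (0 < dist2 (V i) a b) by (apply dist2_pos; lra).
    assert (0 < dist2 (V i) a 10) by (apply dist2_pos; lra).
    assert (100 * dist2 (V i) a b <= b * b * dist2 (V i) a 10).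
    { unfold dist2. pose proof (Rsqr_ge0 (V i - a)). assert (100 <= b*b) by nra.
      assert (0 <= (b*b - 100) * ((V i - a)*(V i - a))) by (apply Rmult_le_pos; lra). nra. }
    replace (100 / (b * b) * / dist2 (V i) a 10) with (/ (b * b * dist2 (V i) a 10 / 100)) by (field; nra).
    apply Rinv_le_contravar; [nra | lra]. }
  replace (10 / b * (10 * mom2 N V a 10)) with (b * (100 / (b * b) * mom2 N V a 10)) by (field; lra).
  apply Rmult_le_compat_l; lra.
Qed.

(* No V_i lies in [-1, -etas]: points left of -1 are at distance >= 1/10 from a, and
   points right of -etas are at comparable distance from a + i b and from a - i a. *)
Lemma mom2_gap_bound a b : -9/10 <= a <= - 2 * etas -> 0 < b -> mom2 N V a b <= 100 + 5 * mom2 N V a (- a).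
Proof.
  intros Ha Hb. destruct Hreg as (_ & _ & Hgap & _).
  unfold mom2. rewrite <- avg_scal, <- (avg_const N HN 100), <- avg_plus.
  apply avg_le; auto. intros i Hi. specialize (Hgap i Hi).
  assert (0 < dist2 (V i) a b) by (apply dist2_pos; lra).
  assert (0 < dist2 (V i) a (-a)) by (apply dist2_pos; lra).
  assert (0 <= / dist2 (V i) a (-a)) by (left; apply Rinv_0_lt_compat; lra).
  destruct (Rlt_le_dec (V i) (-1)).
  - assert (/ dist2 (V i) a b <= 100).
    { replace 100 with (/ (1/100)) by field. apply Rinv_le_contravar; [lra | unfold dist2; nra]. }
    lra.
  - assert (V i > - etas) by (destruct (Rle_lt_dec (V i) (-etas)); [exfalso; apply Hgap; lra | lra]).
    assert (dist2 (V i) a (-a) <= 5 * dist2 (V i) a b) by (unfold dist2; nra).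
    assert (/ dist2 (V i) a b <= 5 * / dist2 (V i) a (-a)).
    { replace (5 * / dist2 (V i) a (-a)) with (/ (dist2 (V i) a (-a) / 5)) by (field; lra).
      apply Rinv_le_contravar; lra. }
    lra.
Qed.

(* If [b] were below the floor [fl], regularity at [a + i fl] would give
   [mom2 >= sqrt (a + fl) / (CV fl) >= 1 / (2 CV sqrt etas) >= 1 / s]. *)
Lemma stable_im_floor s a b : 0 < s <= 1/100 -> 4 * CV * CV * etas <= s * s -> etas <= s * s ->
  0 <= a <= 1 -> 0 < b <= 10 -> s * mom2 N V a b < 1 -> sqrt etas * sqrt a + etas <= b.
Proof.
  intros Hs1 Hs2 Hs3 Ha Hb HI. assert (etas <= 1/10000) by nra.
  set (r := sqrt etas). set (fl := r * sqrt a + etas).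
  assert (Hr : 0 < r) by (apply sqrt_lt_R0; lra). assert (Hrr : r * r = etas) by (apply sqrt_sqrt; lra).
  assert (Hsa : 0 <= sqrt a) by apply sqrt_pos.
  assert (sqrt a <= 1) by (rewrite <- sqrt_1; apply sqrt_le_1_alt; lra).
  assert (r <= 1/100) by (apply Rsqr_incr_0_var; unfold Rsqr; lra).
  destruct (Rle_lt_dec fl b) as [Hfb|Hfb]; auto. exfalso.
  assert (Hfl : 0 < fl) by (unfold fl; nra).
  set (q := sqrt (a + fl)). assert (Hq : 0 < q) by (apply sqrt_lt_R0; lra).
  assert (Hqq : q * q = a + fl) by (apply sqrt_sqrt; lra).
  assert (r <= q) by (apply sqrt_le_1_alt; unfold fl; nra).
  assert (sqrt a <= q) by (apply sqrt_le_1_alt; lra).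
  assert (Hfl2 : fl <= 2 * r * q) by (unfold fl; nra).
  assert (r * sqrt a <= 1/100 * 1) by (apply Rmult_le_compat; lra).
  assert (fl <= 10) by (unfold fl; lra).
  destruct (imS_regular_right a fl Ha) as [R1 _]; [split; [unfold fl, r; lra | lra]|].
  fold q in R1. rewrite imS_mom2 in R1.
  assert (mom2 N V a fl <= mom2 N V a b) by (apply mom2_antitone; lra).
  assert (0 <= mom2 N V a fl) by (apply mom2_nonneg; auto).
  assert (2 * CV * r <= s) by (destruct (Rle_lt_dec (2*CV*r) s); auto; nra).
  assert (Hq8 : q <= CV * fl * mom2 N V a fl).
  { apply Rmult_le_reg_l with (/ CV); [apply Rinv_0_lt_compat; lra|].
    replace (/ CV * (CV * fl * mom2 N V a fl)) with (fl * mom2 N V a fl) by (field; lra). lra. }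
  assert (q <= CV * (2 * r * q) * mom2 N V a fl).
  { eapply Rle_trans; [apply Hq8|]. apply Rmult_le_compat_r; [lra|]. apply Rmult_le_compat_l; lra. }
  assert (1 <= 2 * CV * r * mom2 N V a fl) by (apply Rmult_le_reg_l with q; auto; nra).
  nra.
Qed.

(* Regularity at [a + i (-a)] bounds [mom2 a (-a)] by [CV / sqrt (-2 a)], and
   [sqrt (-2 a) >= 640 CV t] left of [- ref_depth CV * t^2]. *)
Lemma mom2_left_small t a b : 0 < t <= 1/12800 -> etas <= t * t ->
  -9/10 <= a <= - ref_depth CV * t * t -> 0 < b -> t * mom2 N V a b <= 1/64.
Proof.
  intros Ht Hs Ha Hb. unfold ref_depth in Ha.
  assert (0 <= CV * CV * t * t) by (pose proof (Rsqr_ge0 (CV*t)); nra).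
  pose proof (mom2_gap_bound a b ltac:(nra) Hb).
  destruct (imS_regular_left a (-a)) as [_ R1]; [lra| nra |].
  rewrite imS_mom2, Rabs_left1 in R1 by lra. replace (- a + - a) with (-2 * a) in R1 by ring.
  set (q := sqrt (-2 * a)) in *. assert (Hq : 0 < q) by (apply sqrt_lt_R0; lra).
  assert (Hq2 : 640 * CV * t <= q).
  { unfold q. rewrite <- (sqrt_square (640 * CV * t)) by (apply Rmult_le_pos; lra).
    apply sqrt_le_1_alt. nra. }
  assert (HI : mom2 N V a (-a) <= CV / q).
  { apply Rmult_le_reg_l with (-a); [lra|].
    replace (- a * (CV / q)) with (CV * (- a / q)) by (field; lra). lra. }
  assert (t * (CV / q) <= 1 / 640).
  { apply Rmult_le_reg_r with (640 * q); [lra|].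
    replace (t * (CV / q) * (640 * q)) with (640 * CV * t) by (field; lra). lra. }
  assert (t * mom2 N V a b <= t * (100 + 5 * (CV / q))) by (apply Rmult_le_compat_l; lra).
  lra.
Qed.


Section SmallTime.
Variable t : R.
Hypotheses (Ht : 0 < t) (Hts : t <= t_max CV) (Hsmall : (16 * CV * CV + 4) * etas <= t * t).

Lemma t_small : t <= 1/12800 /\ (ref_depth CV + edge_hi CV + edge_lo CV + 1) * t <= 1/12800.
Proof.
  destruct (edge_constants_bounds CV HCV) as (? & ? & ?). unfold t_max in Hts.
  set (X := ref_depth CV + edge_hi CV + edge_lo CV + 1) in *. assert (1 <= X) by (unfold X; lra).
  assert (X * t <= 1/12800).
  { apply Rle_trans with (X * / (12800 * X)); [apply Rmult_le_compat_l; lra | right; field; lra]. }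
  split; nra.
Qed.

Lemma etas_small : 16 * CV * CV * etas <= t * t /\ etas <= t * t /\ t <= 1/100.
Proof. pose proof (Rsqr_ge0 CV). destruct t_small. repeat split; nra. Qed.

Lemma sqrt_t_small : sqrt t <= 1/100.
Proof.
  destruct t_small. replace (1/100) with (sqrt (1/10000)); [apply sqrt_le_1_alt; lra|].
  replace (1/10000) with ((1/100)*(1/100)) by field. rewrite sqrt_square; lra.
Qed.

Lemma stable_im_floor_t a b : 0 <= a <= 1 -> 0 < b <= 10 -> t * mom2 N V a b < 1 ->
  sqrt etas * sqrt a + etas <= b.
Proof. destruct etas_small as (? & ? & ?). apply (stable_im_floor t); nra. Qed.

Lemma imS_upper a b : -1 <= a <= 1 -> 0 < b -> t * mom2 N V a b < 1 ->
  imS N V a b <= (CV + 1) * (t + sqrt (Rmax a 0) + sqrt b).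
Proof.
  intros Ha Hb HI. destruct etas_small as (S1 & S2 & S3). assert (etas <= 1/10000) by nra.
  pose proof (sqrt_pos (Rmax a 0)). pose proof (sqrt_pos b).
  assert (Hup : forall X, 0 <= X -> X <= t + sqrt (Rmax a 0) + sqrt b ->
                 X <= (CV + 1) * (t + sqrt (Rmax a 0) + sqrt b)) by (intros; nra).
  assert (0 <= imS N V a b) by (rewrite imS_mom2; apply Rmult_le_pos; [lra | now apply mom2_nonneg]).
  destruct (Rlt_le_dec 10 b) as [Hb10|Hb10].
  - apply Hup; auto. pose proof (imS_le_inv N V a b HN Hb).
    assert (/ b <= 1) by (replace 1 with (/1) by field; apply Rinv_le_contravar; lra).
    assert (1 <= sqrt b) by (rewrite <- sqrt_1; apply sqrt_le_1_alt; lra). lra.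
  - destruct (Rle_lt_dec 0 a) as [Ha0|Ha0].
    + assert (sqrt etas * sqrt a + etas <= b) by (apply stable_im_floor_t; lra).
      destruct (imS_regular_right a b) as [_ R2]; [lra | lra | ].
      rewrite Rmax_left by lra. pose proof (sqrt_plus_le a b ltac:(lra) ltac:(lra)).
      pose proof (sqrt_pos a). nra.
    + destruct (Rle_lt_dec etas b) as [He|He].
      * destruct (imS_regular_left a b) as [_ R1]; [lra | lra | ].
        pose proof (div_sqrt_le_sqrt b (Rabs a) Hb (Rabs_pos a)). nra.
      * apply Hup; auto. rewrite imS_mom2.
        assert (b * mom2 N V a b <= b / t).
        { unfold Rdiv. apply Rmult_le_compat_l; [lra|].
          apply Rmult_le_reg_l with t; [lra|]. rewrite Rinv_r by lra. lra. }
        assert (b / t <= t) by (apply Rmult_le_reg_r with t; [lra|]; unfold Rdiv; rewrite Rmult_assoc, Rinv_l; lra).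
        lra.
Qed.

Lemma imS_lower_right a b : 0 <= a <= 1 -> 0 < b < 11 -> t * mom2 N V a b < 1 ->
  / (4 * CV) * sqrt (a + b) <= imS N V a b.
Proof.
  intros Ha Hb HI. destruct etas_small as (S1 & S2 & S3). assert (etas <= 1/10000) by nra. pose proof (sqrt_pos (a + b)).
  assert (0 < / CV) by (apply Rinv_0_lt_compat; lra).
  replace (/ (4 * CV)) with (/4 * / CV) by (field; lra).
  destruct (Rle_lt_dec b 10) as [Hb10|Hb10].
  - assert (sqrt etas * sqrt a + etas <= b) by (apply stable_im_floor_t; lra).
    destruct (imS_regular_right a b) as [R1 _]; [lra | lra | ]. nra.
  - pose proof (imS_large_im a b ltac:(lra)).
    assert (sqrt etas * sqrt a + etas <= 10).
    { assert (sqrt etas <= 1) by (rewrite <- sqrt_1; apply sqrt_le_1_alt; lra).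
      assert (sqrt a <= 1) by (rewrite <- sqrt_1; apply sqrt_le_1_alt; lra).
      pose proof (sqrt_pos etas). pose proof (sqrt_pos a). nra. }
    destruct (imS_regular_right a 10) as [R1 _]; [lra | lra | ].
    assert (sqrt (a + b) <= 2 * sqrt (a + 10)).
    { replace (2 * sqrt (a + 10)) with (sqrt (4 * (a + 10))); [apply sqrt_le_1_alt; lra|].
      rewrite sqrt_mult by lra. replace 4 with (2*2) by ring. rewrite sqrt_square; lra. }
    assert (10 / b >= 10 / 11).
    { unfold Rdiv. apply Rle_ge, Rmult_le_compat_l; [lra | apply Rinv_le_contravar; lra]. }
    pose proof (sqrt_pos (a + 10)).
    assert (0 <= imS N V a 10) by (rewrite imS_mom2; apply Rmult_le_pos; [lra | apply mom2_nonneg; auto; lra]).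
    nra.
Qed.

Lemma imS_lower_left a b : -1 <= a <= 0 -> etas <= b < 11 ->
  / (4 * CV) * (b / sqrt (Rabs a + b)) <= imS N V a b.
Proof.
  intros Ha Hb. destruct etas_small as (S1 & S2 & S3). assert (etas <= 1/10000) by nra.
  assert (0 < / CV) by (apply Rinv_0_lt_compat; lra).
  replace (/ (4 * CV)) with (/4 * / CV) by (field; lra).
  assert (Hra : Rabs a <= 1) by (rewrite Rabs_left1 by lra; lra).
  assert (Hq : 0 < sqrt (Rabs a + b)) by (apply sqrt_lt_R0; pose proof (Rabs_pos a); lra).
  assert (0 <= b / sqrt (Rabs a + b))
    by (unfold Rdiv; apply Rmult_le_pos; [lra | left; apply Rinv_0_lt_compat; lra]).
  assert (Hsqrt16 : sqrt 16 = 4) by (replace 16 with (4*4) by ring; rewrite sqrt_square; lra).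
  destruct (Rle_lt_dec b 10) as [Hb10|Hb10].
  - destruct (imS_regular_left a b) as [R1 _]; [lra | lra | ]. nra.
  - pose proof (imS_large_im a b ltac:(lra)).
    destruct (imS_regular_left a 10) as [R1 _]; [lra | lra | ].
    assert (sqrt (Rabs a + 10) <= 4) by (rewrite <- Hsqrt16; apply sqrt_le_1_alt; lra).
    assert (0 < sqrt (Rabs a + 10)) by (apply sqrt_lt_R0; pose proof (Rabs_pos a); lra).
    assert (10 / sqrt (Rabs a + 10) >= 10 / 4).
    { unfold Rdiv. apply Rle_ge, Rmult_le_compat_l; [lra | apply Rinv_le_contravar; lra]. }
    pose proof (div_sqrt_le_sqrt b (Rabs a) ltac:(lra) (Rabs_pos a)).
    assert (sqrt b <= 4) by (rewrite <- Hsqrt16; apply sqrt_le_1_alt; lra).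
    assert (10 / b >= 10 / 11).
    { unfold Rdiv. apply Rle_ge, Rmult_le_compat_l; [lra | apply Rinv_le_contravar; lra]. }
    assert (/ CV * (10 / sqrt (Rabs a + 10)) >= / CV * (10/4)) by (apply Rle_ge, Rmult_le_compat_l; lra).
    assert (10 / b * imS N V a 10 >= 10/11 * (/ CV * (10/4))) by (apply Rle_ge, Rmult_le_compat; lra).
    nra.
Qed.

Lemma sqrt_im_le_imS_left a b c : -1 <= a < 0 -> etas <= b < 11 -> 1 <= c -> - a + b <= c * b ->
  sqrt b <= 4 * CV * c * imS N V a b.
Proof.
  intros Ha Hb Hc Hab. pose proof (imS_lower_left a b ltac:(lra) Hb) as ML. rewrite Rabs_left in ML by lra.
  assert (Hsb : 0 < sqrt b) by (apply sqrt_lt_R0; lra).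
  assert (Hsbb : sqrt b * sqrt b = b) by (apply sqrt_sqrt; lra).
  assert (Hq : sqrt (- a + b) <= c * sqrt b)
    by (apply Rle_trans with (sqrt (c * b)); [apply sqrt_le_1_alt | apply sqrt_scale_le]; lra).
  assert (Hq0 : 0 < sqrt (- a + b)) by (apply sqrt_lt_R0; lra).
  assert (sqrt b / c <= b / sqrt (- a + b)).
  { unfold Rdiv. rewrite <- Hsbb at 2.
    apply Rle_trans with (sqrt b * sqrt b * / (c * sqrt b)); [right; field; lra|].
    apply Rmult_le_compat_l; [nra | apply Rinv_le_contravar; lra]. }
  assert (/ (4 * CV) * (sqrt b / c) <= imS N V a b).
  { apply Rle_trans with (/ (4 * CV) * (b / sqrt (- a + b))); auto.
    apply Rmult_le_compat_l; [left; apply Rinv_0_lt_compat|]; lra. }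
  apply Rmult_le_reg_l with (/ (4 * CV) * / c); [apply Rmult_lt_0_compat; apply Rinv_0_lt_compat; lra|].
  replace (/ (4 * CV) * / c * (4 * CV * c * imS N V a b)) with (imS N V a b) by (field; lra).
  replace (/ (4 * CV) * / c * sqrt b) with (/ (4 * CV) * (sqrt b / c)) by (field; lra). lra.
Qed.


(* The reference point [ref_re + i t^2], whose image under [w -> w - t m_V(w)] is [ref_E]. *)
Definition ref_re := - ref_depth CV * t * t.
Definition ref_E := ref_re - t * reS N V ref_re (t * t).

Lemma ref_point_facts : -9/10 <= ref_re /\ t * mom2 N V ref_re (t * t) <= 1/64 /\
  Rabs ref_E <= 1/50 /\ ref_depth CV * t * t <= t / 12800.
Proof.
  destruct (edge_constants_bounds CV HCV) as (HL & HLo & HHi). destruct t_small as [T1 T2].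
  destruct etas_small as (S1 & S2 & S3).
  assert (HLt : ref_depth CV * t <= 1/12800) by nra.
  assert (ref_depth CV * t * t <= t / 12800) by nra.
  assert (-9/10 <= ref_re) by (unfold ref_re; nra).
  assert (HI : t * mom2 N V ref_re (t * t) <= 1/64).
  { apply mom2_left_small; unfold ref_re; nra. }
  repeat split; auto.
  pose proof (t_reS_abs_le N V t ref_re (t * t) HN Ht ltac:(nra) ltac:(lra)) as HR.
  pose proof sqrt_t_small. apply Rabs_le_between in HR. apply Rabs_le. unfold ref_E, ref_re in *. nra.
Qed.

Lemma stable_sep_right v a b : 0 <= v <= 1 -> 0 < b -> t * mom2 N V a b < 1 ->
  sqrt (dist2 v a b) <= 10 -> t * t < 4 * CV * CV * sqrt (dist2 v a b).
Proof.
  intros Hv Hb HI Hd10. destruct etas_small as (S1 & S2 & S3).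
  set (d := sqrt (dist2 v a b)) in *.
  assert (Hd : 0 < d) by (apply sqrt_lt_R0, dist2_pos; lra).
  assert (Hdd : d * d = dist2 v a b) by (apply sqrt_sqrt; left; apply dist2_pos; lra).
  assert (HI0 : 0 <= mom2 N V v d) by (apply mom2_nonneg; auto).
  assert (Hcmp : mom2 N V v d <= 2 * mom2 N V a b) by (apply mom2_le_twice; auto; unfold dist2 in Hdd; lra).
  assert (Hfl : sqrt etas * sqrt v + etas <= d).
  { apply (stable_im_floor (t / 2)); try nra. }
  destruct (imS_regular_right v d) as [R1 _]; [lra | lra | ].
  rewrite imS_mom2 in R1.
  assert (sqrt d <= sqrt (v + d)) by (apply sqrt_le_1_alt; lra).
  set (s := sqrt d) in *. assert (Hs : 0 < s) by (apply sqrt_lt_R0; lra).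
  assert (Hss : s * s = d) by (apply sqrt_sqrt; lra).
  assert (t * mom2 N V v d < 2) by (assert (t * mom2 N V v d <= t * (2 * mom2 N V a b)) by (apply Rmult_le_compat_l; lra); lra).
  assert (t * (/ CV * s) < 2 * d).
  { apply Rle_lt_trans with (t * (d * mom2 N V v d)); [|nra]. apply Rmult_le_compat_l; [lra|].
    apply Rle_trans with (/ CV * sqrt (v + d)); auto.
    apply Rmult_le_compat_l; [left; apply Rinv_0_lt_compat|]; lra. }
  assert (t < 2 * CV * s).
  { apply Rmult_lt_reg_r with (/ CV * s); [apply Rmult_lt_0_compat; [apply Rinv_0_lt_compat|]; lra|].
    replace (2 * CV * s * (/ CV * s)) with (2 * (s * s)) by (field; lra). lra. }
  nra.
Qed.

Lemma stable_sep_left v a b : - etas < v < 0 -> 0 < b -> t * mom2 N V a b < 1 ->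
  sqrt (dist2 v a b) <= 10 -> t * t < 8 * CV * CV * Rmax (sqrt (dist2 v a b)) etas.
Proof.
  intros Hv Hb HI Hd10. destruct etas_small as (S1 & S2 & S3).
  set (d := sqrt (dist2 v a b)) in *.
  assert (Hd : 0 < d) by (apply sqrt_lt_R0, dist2_pos; lra).
  assert (Hdd : d * d = dist2 v a b) by (apply sqrt_sqrt; left; apply dist2_pos; lra).
  set (r := Rmax d etas). assert (Hr1 : d <= r) by apply Rmax_l. assert (Hr2 : etas <= r) by apply Rmax_r.
  assert (etas <= 1) by nra.
  assert (Hr3 : r <= 10) by (unfold r; apply Rmax_lub; lra).
  assert (d * d <= r * r) by (apply Rmult_le_compat; lra).
  assert (Hcmp : mom2 N V v r <= 2 * mom2 N V a b) by (apply mom2_le_twice; auto; [lra | unfold dist2 in Hdd; lra]).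
  destruct (imS_regular_left v r) as [R1 _]; [lra | lra | ].
  rewrite imS_mom2 in R1.
  assert (Habs : Rabs v <= etas) by (apply Rabs_le; lra).
  set (s := sqrt (2 * r)). assert (Hs : 0 < s) by (apply sqrt_lt_R0; lra).
  assert (Hss : s * s = 2 * r) by (apply sqrt_sqrt; lra).
  assert (sqrt (Rabs v + r) <= s) by (apply sqrt_le_1_alt; lra).
  assert (0 < sqrt (Rabs v + r)) by (apply sqrt_lt_R0; pose proof (Rabs_pos v); lra).
  assert (r / s <= r / sqrt (Rabs v + r)).
  { unfold Rdiv. apply Rmult_le_compat_l; [lra | apply Rinv_le_contravar; lra]. }
  assert (0 <= mom2 N V v r) by (apply mom2_nonneg; auto; lra).
  assert (/ CV * (r / s) <= r * mom2 N V v r).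
  { apply Rle_trans with (/ CV * (r / sqrt (Rabs v + r))); auto.
    apply Rmult_le_compat_l; [left; apply Rinv_0_lt_compat|]; lra. }
  assert (t * mom2 N V v r < 2) by (assert (t * mom2 N V v r <= t * (2 * mom2 N V a b)) by (apply Rmult_le_compat_l; lra); lra).
  assert (Hk : t * (/ CV * (r / s)) < 2 * r).
  { apply Rle_lt_trans with (t * (r * mom2 N V v r)); [apply Rmult_le_compat_l; lra | nra]. }
  assert (t < 2 * CV * s).
  { replace (t * (/ CV * (r / s))) with (t * r / (CV * s)) in Hk by (field; lra).
    apply Rmult_lt_reg_r with (r / (CV * s)); [apply Rdiv_lt_0_compat; nra|].
    replace (2 * CV * s * (r / (CV * s))) with (2 * r) by (field; lra). unfold Rdiv in *. lra. }
  nra.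
Qed.

(* Stable points stay [2 sep t^2] away from the spectrum: far from [-1, 1] because [|a| <= 4/5],
   and near it by the two lemmas above, no [V_i] lying in [-1, -etas]. *)
Lemma stable_sep i a b : (i < N)%nat -> -4/5 <= a <= 4/5 -> 0 < b -> t * mom2 N V a b < 1 ->
  2 * sep CV * (t * t) <= sqrt (dist2 (V i) a b).
Proof.
  intros Hi Ha Hb HI. destruct t_small as [T1 _]. destruct etas_small as (S1 & S2 & S3).
  assert (HC : 0 < CV * CV + 1) by (pose proof (Rsqr_ge0 CV); lra).
  set (c := 2 * sep CV).
  assert (Hc : c * (8 * (CV * CV + 1)) = 1) by (unfold c, sep; field; lra).
  assert (Hc0 : 0 < c) by (unfold c, sep; apply Rmult_lt_0_compat; [lra | apply Rinv_0_lt_compat; lra]).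
  set (d := sqrt (dist2 (V i) a b)).
  assert (Hd : 0 < d) by (apply sqrt_lt_R0, dist2_pos; lra).
  assert (Hdd : d * d = dist2 (V i) a b) by (apply sqrt_sqrt; left; apply dist2_pos; lra).
  destruct (Rle_lt_dec (c * (t * t)) d) as [|Hcon]; auto. exfalso.
  assert (Hc1 : c <= 1/8) by (pose proof (Rsqr_ge0 CV); nra).
  assert (Hdsm : d < 1/100) by nra.
  destruct Hreg as (_ & _ & Hgap & _). specialize (Hgap i Hi).
  destruct (Rlt_le_dec 1 (Rabs (V i))) as [Hfar|Hnear].
  - assert (Rabs (V i - a) >= 1/5).
    { pose proof (Rabs_triang_inv (V i) a). assert (Rabs a <= 4/5) by (apply Rabs_le; lra). lra. }
    assert ((V i - a) * (V i - a) >= 1/25).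
    { assert (Rabs (V i - a) * Rabs (V i - a) = (V i - a) * (V i - a))
        by (rewrite <- Rabs_mult; apply Rabs_right, Rle_ge, Rsqr_ge0). nra. }
    unfold dist2 in Hdd. pose proof (Rsqr_ge0 b). nra.
  - apply Rabs_le_between in Hnear. destruct (Rle_lt_dec 0 (V i)) as [Hpos|Hneg].
    + pose proof (stable_sep_right (V i) a b ltac:(lra) Hb HI ltac:(fold d; lra)) as Hr. fold d in Hr. nra.
    + assert (- etas < V i) by (destruct (Rle_lt_dec (V i) (- etas)); [exfalso; apply Hgap|]; lra).
      pose proof (stable_sep_left (V i) a b ltac:(lra) Hb HI ltac:(fold d; lra)) as Hl. fold d in Hl.
      destruct (Rle_lt_dec d etas).
      * rewrite Rmax_right in Hl by lra. nra.
      * rewrite Rmax_left in Hl by lra. nra.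
Qed.

Section Subordination.
Variable m : Cx -> Cx.
Hypothesis Hm : is_mfc N V t m.

Lemma subord_facts z : 0 < Im z <= 10 -> -3/4 <= Re z <= 3/4 ->
  -4/5 <= Re (xi t m z) <= 4/5 /\ 0 < Im (xi t m z) < 11 /\
  t * mom2 N V (Re (xi t m z)) (Im (xi t m z)) < 1 /\
  0 < Im (m z) /\ Im (m z) = imS N V (Re (xi t m z)) (Im (xi t m z)) /\
  Re z = Re (xi t m z) - t * reS N V (Re (xi t m z)) (Im (xi t m z)) /\
  Im z = Im (xi t m z) - t * imS N V (Re (xi t m z)) (Im (xi t m z)) /\
  Im (xi t m z) = Im z + t * Im (m z).
Proof.
  intros Hz1 Hz2. destruct (fc_subordination N V t m z HN Ht Hm ltac:(lra)) as (HM & E1 & E2 & Hb & HI & Ea & Eb).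
  pose proof (t_reS_abs_le N V t (Re (xi t m z)) _ HN Ht Hb ltac:(lra)) as HR.
  pose proof sqrt_t_small. destruct t_small.
  rewrite <- E2 in HR. apply Rabs_le_between in HR.
  assert (Im (xi t m z) < 11).
  { apply (subord_im_lt_11 N V t (Re (xi t m z)) (Im (xi t m z)) (Im z)); auto; try lra. now rewrite <- E1. }
  repeat split; try lra.
  - rewrite E2 in Ea; lra.
  - rewrite E1 in Eb; lra.
Qed.

Lemma re_sub_ref_E z : 0 < Im z <= 10 -> -3/4 <= Re z <= 3/4 ->
  exists P Q, Re z - ref_E = (Re (xi t m z) - ref_re) * P + (Im (xi t m z) - t * t) * Q /\
   3/4 <= P <= 5/4 /\ Rabs ((Im (xi t m z) - t * t) * Q) <= (Im (xi t m z) + t * t) / 4.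
Proof.
  intros Hz1 Hz2. destruct ref_point_facts as (Har & HIr & _).
  destruct (subord_facts z Hz1 Hz2) as (Ha & Hb & HI & _ & _ & ER & _).
  destruct (subord_diff_near_identity N V t (Re (xi t m z)) (Im (xi t m z)) ref_re (t * t) HN Ht
              ltac:(lra) ltac:(nra) ltac:(lra) HIr) as (P & Q & EPQ & HP & HQ).
  rewrite <- ER in EPQ. exists P, Q. repeat split; auto; try lra.
  assert (0 <= t * t) by nra. rewrite Rabs_mult.
  apply Rle_trans with (Rabs (Im (xi t m z) - t * t) * (1/4)); [apply Rmult_le_compat_l; [apply Rabs_pos | lra]|].
  assert (Rabs (Im (xi t m z) - t * t) <= Im (xi t m z) + t * t) by (apply Rabs_le; lra). lra.
Qed.

Lemma im_xi_upper z : 0 < Im z <= 10 -> -3/4 <= Re z <= 3/4 ->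
  Im (xi t m z) <= 2 * Im z + 2 * (CV + 1) * t * t + 2 * (CV + 1) * (CV + 1) * t * t + Rmax (Re (xi t m z)) 0.
Proof.
  intros Hz1 Hz2. destruct etas_small as (S1 & S2 & S3).
  destruct (subord_facts z Hz1 Hz2) as (Ha & Hb & HI & HM & EM & _ & _ & EB).
  pose proof (imS_upper (Re (xi t m z)) (Im (xi t m z)) ltac:(lra) ltac:(lra) HI) as MU.
  rewrite <- EM in MU.
  set (a := Re (xi t m z)) in *. set (b := Im (xi t m z)) in *. set (M := Im (m z)) in *.
  set (A := Rmax a 0) in *. assert (HA0 : 0 <= A) by apply Rmax_r.
  set (CU := CV + 1) in *.
  pose proof (mult_sqrt_le_half A (CU * t) HA0 ltac:(unfold CU; nra)).
  pose proof (mult_sqrt_le_half b (CU * t) ltac:(lra) ltac:(unfold CU; nra)).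
  assert (t * M <= t * (CU * (t + sqrt A + sqrt b))) by (apply Rmult_le_compat_l; lra).
  lra.
Qed.

(* Near a point of positive density, [Im m] stays bounded below as [eta -> 0], so
   [t mom2(xi) >= 1/2]; hence [xi] lies right of [ref_re] and the identity of
   [re_sub_ref_E] forbids [E'] from being far left of [ref_E]. *)
Lemma density_support_ge E' : -3/4 <= E' <= 3/4 -> density_pos m E' -> ref_E - edge_lo CV * t * t <= E'.
Proof.
  intros HE [r [Hr Hd]]. destruct (Hd (r/2)) as [d0 [Hd0 Hd1]]; [lra|].
  destruct ref_point_facts as (Har & HIr & HEr & HLt). destruct t_small as [T1 T2].
  destruct etas_small as (S1 & S2 & S3). destruct (edge_constants_bounds CV HCV) as (CP1 & CP2 & CP3).
  pose proof PI_RGT_0 as Hpi.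
  set (mu := PI * r / 2). assert (Hmu : 0 < mu) by (unfold mu; nra).
  set (e := Rmin (d0 / 2) (Rmin (t * t) (t * mu / 2))).
  assert (He1 : 0 < e) by (unfold e; repeat apply Rmin_glb_lt; nra).
  assert (He2 : e <= d0 / 2) by apply Rmin_l.
  assert (He3 : e <= t * t) by (unfold e; eapply Rle_trans; [apply Rmin_r | apply Rmin_l]).
  assert (He4 : e <= t * mu / 2) by (unfold e; eapply Rle_trans; [apply Rmin_r | apply Rmin_r]).
  set (z := mkC E' e). assert (Htt : t * t <= 1) by nra.
  assert (Hz1 : 0 < Im z <= 10) by (unfold z; simpl; lra). assert (Hz2 : -3/4 <= Re z <= 3/4) by (unfold z; simpl; lra).
  pose proof (im_xi_upper z Hz1 Hz2) as Hb2.
  destruct (re_sub_ref_E z Hz1 Hz2) as (P & Q & EPQ & HP & HQ).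
  destruct (subord_facts z Hz1 Hz2) as (Ha & Hb & HI & HM & EM & _ & _ & EB).
  change (Re z) with E' in EPQ. change (Im z) with e in EB, Hb2.
  set (a := Re (xi t m z)) in *. set (b := Im (xi t m z)) in *. set (M := Im (m z)) in *.
  assert (HMmu : mu < M).
  { specialize (Hd1 e ltac:(lra)). apply Rabs_def2 in Hd1. destruct Hd1 as [_ Hd1]. fold z M in Hd1.
    unfold mu. apply Rmult_lt_reg_r with (/ PI); [apply Rinv_0_lt_compat; lra|].
    replace (PI * r / 2 * / PI) with (r / 2) by (field; lra). unfold Rdiv in Hd1. lra. }
  rewrite imS_mom2 in EM. set (I := mom2 N V a b) in *.
  assert (Hbt : t * mu < b) by (assert (t * mu < t * M) by (apply Rmult_lt_compat_l; lra); lra).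
  assert (HI2 : 1/2 <= t * I).
  { destruct (Rle_lt_dec (1/2) (t*I)) as [|Hc]; auto. exfalso.
    assert (e = b * (1 - t * I)) by (rewrite EM in EB; nra).
    assert (b * (1 - t * I) > b * (1/2)) by (apply Rmult_lt_compat_l; lra). lra. }
  assert (Haar : ref_re < a).
  { destruct (Rlt_le_dec ref_re a) as [|Hc]; auto. exfalso.
    pose proof (mom2_left_small t a b ltac:(lra) S2 ltac:(unfold ref_re in *; lra) ltac:(lra)) as Hleft.
    fold I in Hleft. lra. }
  assert (HA1 : Rmax a 0 <= a - ref_re) by (apply Rmax_lub; unfold ref_re in *; nra).
  assert (P1 : (a - ref_re) * P >= 3/4 * (a - ref_re)) by (apply Rle_ge; rewrite (Rmult_comm (3/4)); apply Rmult_le_compat_l; lra).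
  apply Rabs_le_between in HQ.
  unfold edge_lo. assert (0 <= (CV + 1) * t * t) by (apply Rmult_le_pos; [apply Rmult_le_pos|]; lra).
  assert (0 <= (CV + 1) * (CV + 1) * t * t) by (repeat apply Rmult_le_pos; lra). lra.
Qed.

(* The probe point [edge_probe] lies [edge_hi t^2] right of [ref_E]; the density of
   [m] there is positive, which bounds the edge [Em] from above. *)
Definition edge_probe := ref_E + edge_hi CV * t * t.
Definition im_m_floor := t / (2 * (CV + 1)).

Lemma edge_probe_range : -3/4 <= edge_probe <= 3/4.
Proof.
  destruct ref_point_facts as (_ & _ & HEr & _). destruct t_small as [T1 T2].
  destruct (edge_constants_bounds CV HCV) as (? & ? & ?).
  apply Rabs_le_between in HEr. unfold edge_probe. assert (edge_hi CV * t <= 1/12800) by nra.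
  assert (0 <= edge_hi CV * t * t) by (repeat apply Rmult_le_pos; lra). nra.
Qed.

(* Either [Im xi > t^2], and then [t Im m >= t^2 / 2]; or, comparing with the reference
   point, [Re xi >= t^2], and regularity gives [Im m >= sqrt (Re xi + Im xi) / CV >= t / CV]. *)
Lemma im_m_probe_ge eta : 0 < eta <= t * t / 2 -> im_m_floor <= Im (m (mkC edge_probe eta)).
Proof.
  intros Heta. pose proof edge_probe_range as HEs.
  destruct ref_point_facts as (Har & HIr & HEr & HLt). destruct t_small as [T1 T2].
  destruct etas_small as (S1 & S2 & S3). destruct (edge_constants_bounds CV HCV) as (CP1 & CP2 & CP3).
  assert (Htt : t * t <= 1) by nra.
  set (z := mkC edge_probe eta).
  assert (Hz1 : 0 < Im z <= 10) by (unfold z; simpl; lra). assert (Hz2 : -3/4 <= Re z <= 3/4) by (unfold z; simpl; lra).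
  destruct (re_sub_ref_E z Hz1 Hz2) as (P & Q & EPQ & HP & HQ).
  destruct (subord_facts z Hz1 Hz2) as (Ha & Hb & HI & HM & EM & _ & _ & EB).
  change (Re z) with edge_probe in EPQ. change (Im z) with eta in EB.
  set (a := Re (xi t m z)) in *. set (b := Im (xi t m z)) in *. set (M := Im (m z)) in *.
  assert (Hm0 : im_m_floor <= t / 2).
  { unfold im_m_floor, Rdiv. apply Rmult_le_compat_l; [lra | apply Rinv_le_contravar; lra]. }
  destruct (Rlt_le_dec (t * t) b) as [Hbig|Hsmall'].
  - assert (t / 2 <= M) by (apply Rmult_le_reg_l with t; nra). lra.
  - unfold edge_probe, ref_re, edge_hi in *. apply Rabs_le_between in HQ.
    assert (0 <= ref_depth CV * t * t) by (repeat apply Rmult_le_pos; lra).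
    assert (Hda : 0 < a + ref_depth CV * t * t).
    { destruct (Rlt_le_dec 0 (a + ref_depth CV * t * t)) as [|Hc]; auto. exfalso.
      assert ((a + ref_depth CV * t * t) * P <= 0) by nra. lra. }
    assert ((a + ref_depth CV * t * t) * P <= 5/4 * (a + ref_depth CV * t * t))
      by (rewrite (Rmult_comm (5/4)); apply Rmult_le_compat_l; lra).
    assert (Hat : t * t <= a) by lra.
    assert (sqrt etas * sqrt a + etas <= b) by (apply stable_im_floor_t; nra).
    destruct (imS_regular_right a b) as [R1 _]; [lra | lra | ].
    assert (t <= sqrt (a + b)) by (rewrite <- (sqrt_square t) by lra; apply sqrt_le_1_alt; lra).
    assert (/ CV * t <= M).
    { rewrite EM. apply Rle_trans with (/ CV * sqrt (a + b)); [|lra].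
      apply Rmult_le_compat_l; [left; apply Rinv_0_lt_compat|]; lra. }
    assert (im_m_floor <= / CV * t).
    { unfold im_m_floor, Rdiv. rewrite Rmult_comm. apply Rmult_le_compat_r; [lra|].
      apply Rinv_le_contravar; lra. }
    lra.
Qed.

(* The factor [P] of [subord_diff_coercive] is at least [probe_coerc] (a crude bound
   through the single term [i = 0]); it controls [|Im xi1 - Im xi2| <= |eta1 - eta2| / P]. *)
Definition probe_coerc :=
  t / 2 * / INR N * ((t * im_m_floor / ((Rabs (V 0) + 1) * (Rabs (V 0) + 1) + 121)) *
                     (t * im_m_floor / ((Rabs (V 0) + 1) * (Rabs (V 0) + 1) + 121))).

Lemma probe_coerc_pos : 0 < probe_coerc.
Proof.
  unfold probe_coerc, im_m_floor. pose proof (INR_pos N HN). pose proof (Rabs_pos (V 0)).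
  assert (0 < t * (t / (2 * (CV + 1))) / ((Rabs (V 0) + 1) * (Rabs (V 0) + 1) + 121)).
  { apply Rdiv_lt_0_compat; [apply Rmult_lt_0_compat; auto; apply Rdiv_lt_0_compat; lra | nra]. }
  apply Rmult_lt_0_compat; [apply Rmult_lt_0_compat; [lra | apply Rinv_0_lt_compat; lra] | nra].
Qed.

Lemma probe_coerc_le a b : -4/5 <= a <= 4/5 -> t * im_m_floor <= b < 11 ->
  probe_coerc <= t / 2 * avg N (fun i => (b / dist2 (V i) a b) * (b / dist2 (V i) a b)).
Proof.
  intros Ha Hb. set (D := (Rabs (V 0) + 1) * (Rabs (V 0) + 1) + 121).
  assert (0 < t * im_m_floor) by (unfold im_m_floor; apply Rmult_lt_0_compat; [|apply Rdiv_lt_0_compat]; lra).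
  pose proof (avg_term N HN (fun i => (b / dist2 (V i) a b) * (b / dist2 (V i) a b)) 0
                ltac:(intros; apply Rsqr_ge0) ltac:(lia)) as Hav. simpl in Hav.
  assert (HD : 0 < dist2 (V 0) a b) by (apply dist2_pos; lra).
  assert (HDm : dist2 (V 0) a b <= D).
  { unfold dist2, D. assert (Hva : Rabs (V 0 - a) <= Rabs (V 0) + 1).
    { eapply Rle_trans; [apply Rabs_triang|]. rewrite Rabs_Ropp.
      assert (Rabs a <= 1) by (apply Rabs_le; lra). lra. }
    pose proof (Rsqr_le_of_Rabs_le _ _ Hva). nra. }
  assert (Hv : t * im_m_floor / D <= b / dist2 (V 0) a b).
  { unfold Rdiv. apply Rle_trans with (b * / D).
    - apply Rmult_le_compat_r; [left; apply Rinv_0_lt_compat|]; lra.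
    - apply Rmult_le_compat_l; [lra | apply Rinv_le_contravar; lra]. }
  assert (0 <= t * im_m_floor / D) by (unfold Rdiv; apply Rmult_le_pos; [lra | left; apply Rinv_0_lt_compat; lra]).
  unfold probe_coerc. fold D. rewrite Rmult_assoc. apply Rmult_le_compat_l; [lra|].
  eapply Rle_trans; [|exact Hav]. apply Rmult_le_compat_l; [left; apply Rinv_INR_pos; auto|].
  apply Rmult_le_compat; lra.
Qed.

Lemma im_m_probe_lipschitz eta1 eta2 : 0 < eta1 <= t * t / 2 -> 0 < eta2 <= t * t / 2 ->
  Rabs (Im (m (mkC edge_probe eta1)) - Im (m (mkC edge_probe eta2))) <= (/ probe_coerc + 1) / t * Rabs (eta1 - eta2).
Proof.
  intros H1 H2. pose proof edge_probe_range. pose proof probe_coerc_pos. destruct t_small as [T1 T2].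
  pose proof (im_m_probe_ge eta1 H1) as Hm1. pose proof (im_m_probe_ge eta2 H2) as Hm2.
  set (z1 := mkC edge_probe eta1) in *. set (z2 := mkC edge_probe eta2) in *.
  assert (Hz1 : 0 < Im z1 <= 10) by (unfold z1; simpl; nra). assert (Hz1' : -3/4 <= Re z1 <= 3/4) by (unfold z1; simpl; lra).
  assert (Hz2 : 0 < Im z2 <= 10) by (unfold z2; simpl; nra). assert (Hz2' : -3/4 <= Re z2 <= 3/4) by (unfold z2; simpl; lra).
  destruct (subord_facts z1 Hz1 Hz1') as (Ha1 & Hb1 & HI1 & HM1 & EM1 & ER1 & EI1 & EB1).
  destruct (subord_facts z2 Hz2 Hz2') as (Ha2 & Hb2 & HI2 & HM2 & EM2 & ER2 & EI2 & EB2).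
  change (Re z1) with edge_probe in ER1. change (Re z2) with edge_probe in ER2.
  change (Im z1) with eta1 in EI1, EB1. change (Im z2) with eta2 in EI2, EB2.
  set (a1 := Re (xi t m z1)) in *. set (b1 := Im (xi t m z1)) in *. set (M1 := Im (m z1)) in *.
  set (a2 := Re (xi t m z2)) in *. set (b2 := Im (xi t m z2)) in *. set (M2 := Im (m z2)) in *.
  assert (Hbl1 : t * im_m_floor <= b1) by (assert (t * im_m_floor <= t * M1) by (apply Rmult_le_compat_l; lra); lra).
  destruct (subord_diff_coercive N V t a1 b1 a2 b2 HN Ht ltac:(lra) ltac:(lra) ltac:(lra) ltac:(lra))
    as (P & Q & EP1 & EP2 & HP).
  rewrite <- ER1, <- ER2, Rminus_diag in EP1. rewrite <- EI1, <- EI2 in EP2.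
  pose proof (probe_coerc_le a1 b1 Ha1 ltac:(lra)) as HP2.
  assert (Eid : (b1 - b2) * (P * P + Q * Q) = P * (eta1 - eta2) + Q * ((a1 - a2) * P + (b1 - b2) * Q))
    by (rewrite EP2; ring).
  rewrite <- EP1, Rmult_0_r, Rplus_0_r in Eid.
  assert (Hdb : Rabs (b1 - b2) * P <= Rabs (eta1 - eta2)).
  { assert (Rabs (b1 - b2) * (P * P + Q * Q) = P * Rabs (eta1 - eta2)).
    { rewrite <- (Rabs_right (P * P + Q * Q)) by (pose proof (Rsqr_ge0 Q); nra).
      rewrite <- Rabs_mult, Eid, Rabs_mult, Rabs_right by lra. reflexivity. }
    apply Rmult_le_reg_r with P; [lra|]. pose proof (Rsqr_ge0 Q). pose proof (Rabs_pos (b1 - b2)).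
    assert (0 <= Rabs (b1 - b2) * (Q * Q)) by (apply Rmult_le_pos; lra). nra. }
  assert (Hdb2 : Rabs (b1 - b2) <= / probe_coerc * Rabs (eta1 - eta2)).
  { apply Rmult_le_reg_l with probe_coerc; [lra|]. rewrite <- Rmult_assoc, Rinv_r, Rmult_1_l by lra.
    pose proof (Rabs_pos (b1 - b2)). apply Rle_trans with (Rabs (b1 - b2) * P); [|lra].
    rewrite Rmult_comm. apply Rmult_le_compat_l; lra. }
  replace (M1 - M2) with (((b1 - b2) - (eta1 - eta2)) * / t) by (rewrite EB1, EB2; field; lra).
  rewrite Rabs_mult, (Rabs_right (/ t)) by (left; apply Rinv_0_lt_compat; lra).
  pose proof (Rabs_triang (b1 - b2) (- (eta1 - eta2))) as Htri. rewrite Rabs_Ropp in Htri.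
  replace ((/ probe_coerc + 1) / t * Rabs (eta1 - eta2)) with ((/ probe_coerc + 1) * Rabs (eta1 - eta2) * / t) by (field; lra).
  apply Rmult_le_compat_r; [left; apply Rinv_0_lt_compat; lra | unfold Rminus at 1; lra].
Qed.

Lemma density_pos_edge_probe : density_pos m edge_probe.
Proof.
  pose proof probe_coerc_pos. destruct t_small as [T1 T2].
  assert (Hm0 : 0 < im_m_floor) by (unfold im_m_floor; apply Rdiv_lt_0_compat; lra).
  pose proof PI_RGT_0 as Hpi. assert (0 < / PI) by (apply Rinv_0_lt_compat; lra).
  destruct (lipschitz_right_limit (fun eta => Im (m (mkC edge_probe eta)) / PI) (t * t / 2)
              ((/ probe_coerc + 1) / t / PI) (im_m_floor / PI)) as [l [Hl1 Hl2]].
  - nra.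
  - unfold Rdiv. repeat apply Rmult_le_pos; try lra.
    + assert (0 < / probe_coerc) by (apply Rinv_0_lt_compat; lra). lra.
    + left; apply Rinv_0_lt_compat; lra.
  - intros x y Hx Hy.
    replace (Im (m (mkC edge_probe x)) / PI - Im (m (mkC edge_probe y)) / PI)
      with ((Im (m (mkC edge_probe x)) - Im (m (mkC edge_probe y))) * / PI) by (field; lra).
    rewrite Rabs_mult, (Rabs_right (/ PI)) by lra.
    replace ((/ probe_coerc + 1) / t / PI * Rabs (x - y)) with ((/ probe_coerc + 1) / t * Rabs (x - y) * / PI) by (field; lra).
    apply Rmult_le_compat_r; [lra | now apply im_m_probe_lipschitz].
  - intros x Hx. unfold Rdiv. apply Rmult_le_compat_r; [lra | apply im_m_probe_ge; lra].
  - exists l. split; [|exact Hl2]. apply Rlt_le_trans with (im_m_floor / PI); auto. apply Rdiv_lt_0_compat; lra.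
Qed.

Lemma sep_xi z i : 0 < Im z <= 10 -> -3/4 <= Re z <= 3/4 -> (i < N)%nat ->
  sep CV * (t * t + Im (xi t m z)) <= sqrt (dist2 (V i) (Re (xi t m z)) (Im (xi t m z))).
Proof.
  intros Hz1 Hz2 Hi. destruct (subord_facts z Hz1 Hz2) as (Ha & Hb & HI & _).
  pose proof (stable_sep i (Re (xi t m z)) (Im (xi t m z)) Hi Ha ltac:(lra) HI) as Hsep.
  set (a := Re (xi t m z)) in *. set (b := Im (xi t m z)) in *.
  assert (Hbd : b <= sqrt (dist2 (V i) a b)).
  { rewrite <- (sqrt_square b) at 1 by lra. apply sqrt_le_1_alt. unfold dist2. pose proof (Rsqr_ge0 (V i - a)). lra. }
  assert (Hs : 0 < sep CV <= 1/16).
  { unfold sep. pose proof (Rsqr_ge0 CV). split; [apply Rinv_0_lt_compat; lra|].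
    replace (1/16) with (/ 16) by field. apply Rinv_le_contravar; lra. }
  assert (sep CV * b <= 1/16 * b) by (apply Rmult_le_compat_r; lra).
  lra.
Qed.

Section Edge.
Variable Em : R.
Hypothesis Hedge : is_left_edge m Em.

Lemma edge_bounds : ref_E - edge_lo CV * t * t <= Em <= edge_probe /\ -3/4 <= Em <= 3/4.
Proof.
  destruct Hedge as (H1 & H2 & H3). pose proof edge_probe_range. pose proof density_pos_edge_probe.
  split; split.
  - apply H2. intros E HE HD. now apply density_support_ge.
  - now apply H1.
  - apply H2. intros E HE _. lra.
  - destruct H3 as (E & HE & HD). pose proof (H1 E HE HD). lra.
Qed.

Lemma ref_E_sub_Em_abs : Rabs (ref_E - Em) <= (edge_lo CV + edge_hi CV) * (t * t).
Proof.
  destruct edge_bounds as [[H1 H2] _]. unfold edge_probe in H2. destruct (edge_constants_bounds CV HCV) as (_ & ? & ?).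
  assert (0 <= edge_lo CV * t * t) by (repeat apply Rmult_le_pos; lra).
  assert (0 <= edge_hi CV * t * t) by (repeat apply Rmult_le_pos; lra).
  apply Rabs_le. lra.
Qed.

(* When [Re xi >= 0], [kappa + eta <~ Re xi + Im xi + t^2] and [Im m >~ sqrt (Re xi + Im xi)]. *)
Lemma kappa_bound_right z : 0 < Im z <= 10 -> -3/4 <= Re z <= 3/4 -> 0 <= Re (xi t m z) ->
  t + sqrt (Rabs (Re z - Em) + Im z) <= (kr_const CV + 2) * t + 8 * CV * Im (m z).
Proof.
  intros Hz1 Hz2 Ha0. pose proof ref_E_sub_Em_abs as HEm. destruct ref_point_facts as (Har & _).
  destruct (kappa_consts_ge0 CV HCV) as (HK2 & _ & _). destruct (edge_constants_bounds CV HCV) as (CP1 & CP2 & CP3).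
  destruct (re_sub_ref_E z Hz1 Hz2) as (P & Q & EPQ & HP & HQ).
  destruct (subord_facts z Hz1 Hz2) as (Ha & Hb & HI & HM & EM & _ & _ & EB).
  pose proof (imS_lower_right (Re (xi t m z)) (Im (xi t m z)) ltac:(lra) Hb HI) as ML.
  rewrite <- EM in ML.
  set (a := Re (xi t m z)) in *. set (b := Im (xi t m z)) in *. set (M := Im (m z)) in *.
  unfold ref_re in *. apply Rabs_le_between in HQ.
  assert (Htt : 0 < t * t) by (apply Rmult_lt_0_compat; lra).
  assert (0 <= ref_depth CV * t * t) by (repeat apply Rmult_le_pos; lra).
  assert (0 <= (a - - ref_depth CV * t * t) * P <= 5/4 * (a - - ref_depth CV * t * t))
    by (split; [apply Rmult_le_pos; lra | rewrite (Rmult_comm (5/4)); apply Rmult_le_compat_l; lra]).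
  assert (Hk : Rabs (Re z - Em) + Im z <= 2 * (a + b) + kr_const CV * t * t).
  { assert (Rabs (Re z - Em) <= Rabs (Re z - ref_E) + Rabs (ref_E - Em)).
    { replace (Re z - Em) with ((Re z - ref_E) + (ref_E - Em)) by ring. apply Rabs_triang. }
    assert (Rabs (Re z - ref_E) <= 5/4 * (a + ref_depth CV * t * t) + (b + t * t) / 4) by (apply Rabs_le; lra).
    assert (0 < t * M) by (apply Rmult_lt_0_compat; lra). unfold kr_const. lra. }
  assert (sqrt (Rabs (Re z - Em) + Im z) <= sqrt (2 * (a + b)) + sqrt (kr_const CV * t * t)).
  { eapply Rle_trans; [apply sqrt_le_1_alt, Hk|]. apply sqrt_plus_le; [lra | nra]. }
  pose proof (sqrt_scale_le 2 (a + b) ltac:(lra) ltac:(lra)).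
  pose proof (sqrt_mult_sqr_le (kr_const CV) t HK2 ltac:(lra)).
  assert (sqrt (a + b) <= 4 * CV * M).
  { apply Rmult_le_reg_l with (/ (4 * CV)); [apply Rinv_0_lt_compat; lra|].
    replace (/ (4 * CV) * (4 * CV * M)) with M by (field; lra). lra. }
  lra.
Qed.

(* When [Re xi < 0], either [Im xi < t^2] and everything is [O(t)], or the left regularity
   bound gives [Im m >~ sqrt (Im xi) >~ sqrt (kappa + eta)]. *)
Lemma kappa_bound_left z : 0 < Im z <= 10 -> -3/4 <= Re z <= 3/4 -> Re z >= Em - t * t ->
  Re (xi t m z) < 0 ->
  t + sqrt (Rabs (Re z - Em) + Im z) <=
    (kl_const CV + 4) * t + 4 * CV * (kl_re_const CV + 2) * (kl_const CV + 2) * Im (m z).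
Proof.
  intros Hz1 Hz2 Hz3 Haneg. pose proof ref_E_sub_Em_abs as HEm. destruct edge_bounds as [[Em1 _] _].
  destruct ref_point_facts as (Har & _). destruct etas_small as (S1 & S2 & S3).
  destruct (kappa_consts_ge0 CV HCV) as (_ & HK4 & HK5). destruct (edge_constants_bounds CV HCV) as (CP1 & CP2 & CP3).
  destruct (re_sub_ref_E z Hz1 Hz2) as (P & Q & EPQ & HP & HQ).
  destruct (subord_facts z Hz1 Hz2) as (Ha & Hb & HI & HM & EM & _ & _ & EB).
  set (a := Re (xi t m z)) in *. set (b := Im (xi t m z)) in *. set (M := Im (m z)) in *.
  unfold ref_re in *. apply Rabs_le_between in HQ.
  assert (Htt : 0 < t * t) by nra. assert (0 <= ref_depth CV * t * t) by nra.
  assert (0 <= edge_lo CV * t * t) by nra. assert (Hetab : Im z <= b) by nra.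
  replace (a - - ref_depth CV * t * t) with (a + ref_depth CV * t * t) in EPQ by ring.
  assert (HEr : Rabs (Re z - ref_E) <= (2 * ref_depth CV + edge_lo CV + 1) * (t * t) + b /\
                - a <= kl_re_const CV * (t * t) + b).
  { unfold kl_re_const. destruct (Rle_lt_dec 0 (a + ref_depth CV * t * t)) as [Hda|Hda].
    - assert ((a + ref_depth CV * t * t) * P <= 5/4 * (a + ref_depth CV * t * t))
        by (rewrite (Rmult_comm (5/4)); apply Rmult_le_compat_l; lra).
      assert (0 <= (a + ref_depth CV * t * t) * P) by (apply Rmult_le_pos; lra).
      split; [apply Rabs_le|]; nra.
    - assert ((a + ref_depth CV * t * t) * P <= 3/4 * (a + ref_depth CV * t * t))
        by (rewrite (Rmult_comm (3/4)); apply Rmult_le_compat_neg_l; lra).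
      split; [apply Rabs_le|]; nra. }
  destruct HEr as [HEr Ha2].
  assert (Hk : Rabs (Re z - Em) + Im z <= kl_const CV * (t * t) + 2 * b).
  { assert (Rabs (Re z - Em) <= Rabs (Re z - ref_E) + Rabs (ref_E - Em)).
    { replace (Re z - Em) with ((Re z - ref_E) + (ref_E - Em)) by ring. apply Rabs_triang. }
    unfold kl_const. nra. }
  assert (0 <= M) by lra.
  destruct (Rlt_le_dec b (t * t)) as [Hbs|Hbl].
  - assert (sqrt (Rabs (Re z - Em) + Im z) <= sqrt ((kl_const CV + 2) * t * t)) by (apply sqrt_le_1_alt; lra).
    pose proof (sqrt_mult_sqr_le (kl_const CV + 2) t ltac:(lra) ltac:(lra)).
    assert (0 <= 4 * CV * (kl_re_const CV + 2) * (kl_const CV + 2) * M) by (repeat apply Rmult_le_pos; lra).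
    lra.
  - assert (kl_re_const CV * (t * t) <= kl_re_const CV * b) by (apply Rmult_le_compat_l; lra).
    assert (kl_const CV * (t * t) <= kl_const CV * b) by (apply Rmult_le_compat_l; lra).
    assert (Hsbm : sqrt b <= 4 * CV * (kl_re_const CV + 2) * M)
      by (rewrite EM; apply sqrt_im_le_imS_left; lra).
    assert (sqrt (Rabs (Re z - Em) + Im z) <= sqrt ((kl_const CV + 2) * b)) by (apply sqrt_le_1_alt; lra).
    assert (sqrt (Rabs (Re z - Em) + Im z) <= (kl_const CV + 2) * sqrt b)
      by (eapply Rle_trans; [eassumption | apply sqrt_scale_le; lra]).
    assert ((kl_const CV + 2) * sqrt b <= (kl_const CV + 2) * (4 * CV * (kl_re_const CV + 2) * M))
      by (apply Rmult_le_compat_l; lra).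
    assert (1 * t <= (kl_const CV + 4) * t) by (apply Rmult_le_compat_r; lra).
    lra.
Qed.

Lemma kappa_le z : 0 < Im z <= 10 -> -3/4 <= Re z <= 3/4 -> Re z >= Em - t * t ->
  t + sqrt (Rabs (Re z - Em) + Im z) <= kappa_const CV * (t + Im (m z)).
Proof.
  intros Hz1 Hz2 Hz3. destruct (kappa_consts_ge0 CV HCV) as (HK2 & HK4 & HK5).
  destruct (subord_facts z Hz1 Hz2) as (_ & _ & _ & HM & _).
  assert (0 <= 4 * CV * (kl_re_const CV + 2) * (kl_const CV + 2)) by (repeat apply Rmult_le_pos; lra).
  unfold kappa_const. destruct (Rle_lt_dec 0 (Re (xi t m z))) as [Ha|Ha].
  - pose proof (kappa_bound_right z Hz1 Hz2 Ha). nra.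
  - pose proof (kappa_bound_left z Hz1 Hz2 Hz3 Ha). nra.
Qed.

Lemma re_xi_pos_part_le z : 0 < Im z <= 10 -> -3/4 <= Re z <= 3/4 ->
  Rmax (Re (xi t m z)) 0 <= 2 * Rabs (Re z - Em) + re_const CV * (t * t) + Im (xi t m z).
Proof.
  intros Hz1 Hz2. pose proof ref_E_sub_Em_abs as HEm. destruct (edge_constants_bounds CV HCV) as (CP1 & CP2 & CP3).
  destruct (re_sub_ref_E z Hz1 Hz2) as (P & Q & EPQ & HP & HQ).
  destruct (subord_facts z Hz1 Hz2) as (Ha & Hb & _).
  set (a := Re (xi t m z)) in *. set (b := Im (xi t m z)) in *.
  unfold ref_re in *. apply Rabs_le_between in HQ. apply Rabs_le_between in HEm.
  assert (Htt : 0 < t * t) by (apply Rmult_lt_0_compat; lra).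
  assert (0 <= ref_depth CV * t * t) by (repeat apply Rmult_le_pos; lra).
  assert (0 <= edge_lo CV * (t * t)) by (apply Rmult_le_pos; lra).
  assert (0 <= edge_hi CV * (t * t)) by (apply Rmult_le_pos; lra).
  pose proof (Rle_abs (Re z - Em)). pose proof (Rabs_pos (Re z - Em)).
  unfold re_const. apply Rmax_lub; [|lra].
  destruct (Rle_lt_dec a 0); [lra|].
  assert ((a - - ref_depth CV * t * t) * P >= 3/4 * (a - - ref_depth CV * t * t))
    by (apply Rle_ge; rewrite (Rmult_comm (3/4)); apply Rmult_le_compat_l; lra).
  lra.
Qed.

(* [imS_upper] bounds [Im m] by [t + sqrt (Re xi)_+ + sqrt (Im xi)], with
   [sqrt (Im xi) <= sqrt eta + sqrt t sqrt (Im m)]; the last term is absorbed by AM-GM. *)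
Lemma im_m_le z : 0 < Im z <= 10 -> -3/4 <= Re z <= 3/4 ->
  Im (m z) <= im_m_const CV * (t + sqrt (Rabs (Re z - Em) + Im z)).
Proof.
  intros Hz1 Hz2. pose proof (re_xi_pos_part_le z Hz1 Hz2) as HA.
  destruct (edge_constants_bounds CV HCV) as (CP1 & CP2 & CP3).
  destruct (subord_facts z Hz1 Hz2) as (Ha & Hb & HI & HM & EM & _ & _ & EB).
  pose proof (imS_upper (Re (xi t m z)) (Im (xi t m z)) ltac:(lra) ltac:(lra) HI) as MU.
  rewrite <- EM in MU.
  set (a := Re (xi t m z)) in *. set (b := Im (xi t m z)) in *. set (M := Im (m z)) in *.
  set (k := Rabs (Re z - Em)) in *. set (eta := Im z) in *. assert (Hk0 : 0 <= k) by apply Rabs_pos.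
  assert (HK7 : 0 <= re_const CV) by (unfold re_const; lra).
  set (A := Rmax a 0) in *. assert (HA0 : 0 <= A) by apply Rmax_r.
  assert (HsA : sqrt A <= 2 * sqrt k + (re_const CV + 1) * t + sqrt b).
  { eapply Rle_trans; [apply sqrt_le_1_alt, HA|].
    eapply Rle_trans; [apply sqrt_plus3_le; try lra; apply Rmult_le_pos; nra|].
    pose proof (sqrt_scale_le 2 k ltac:(lra) Hk0). pose proof (sqrt_mult_sqr_le (re_const CV) t HK7 ltac:(lra)).
    replace (re_const CV * (t * t)) with (re_const CV * t * t) by ring. lra. }
  set (CU := CV + 1) in *. assert (HCU : 0 < CU) by (unfold CU; lra).
  assert (Hsb : sqrt b <= sqrt eta + sqrt t * sqrt M).
  { rewrite EB, <- sqrt_mult by lra. apply sqrt_plus_le; [lra | apply Rmult_le_pos; lra]. }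
  assert (Ham : 2 * CU * (sqrt t * sqrt M) <= 4 * CU * CU * t + M / 4).
  { pose proof (two_mult_le_weighted (sqrt t) (sqrt M) (4 * CU) ltac:(lra)) as H.
    rewrite !Rmult_assoc, sqrt_sqrt in H by lra. rewrite sqrt_sqrt in H by lra.
    replace (2 * CU * (sqrt t * sqrt M)) with (CU * (2 * (sqrt t * sqrt M))) by ring.
    apply Rle_trans with (CU * (4 * (CU * t) + / (4 * CU) * M)); [apply Rmult_le_compat_l; lra|].
    right. field. lra. }
  assert (Hske : sqrt k <= sqrt (k + eta)) by (apply sqrt_le_1_alt; lra).
  assert (Hsee : sqrt eta <= sqrt (k + eta)) by (apply sqrt_le_1_alt; lra).
  pose proof (sqrt_pos k). pose proof (sqrt_pos eta). pose proof (sqrt_pos b). pose proof (sqrt_pos (k + eta)).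
  assert (HM2 : M <= CU * ((re_const CV + 2) * t + 2 * sqrt k) + 2 * CU * (sqrt eta + sqrt t * sqrt M)).
  { apply Rle_trans with (CU * (t + (2 * sqrt k + (re_const CV + 1) * t + sqrt b) + sqrt b)).
    - eapply Rle_trans; [apply MU | apply Rmult_le_compat_l; lra].
    - assert (CU * sqrt b <= CU * (sqrt eta + sqrt t * sqrt M)) by (apply Rmult_le_compat_l; lra). lra. }
  assert (CU * sqrt k <= CU * sqrt (k + eta)) by (apply Rmult_le_compat_l; lra).
  assert (CU * sqrt eta <= CU * sqrt (k + eta)) by (apply Rmult_le_compat_l; lra).
  assert (0 <= CU * CU * t) by (repeat apply Rmult_le_pos; lra).
  assert (0 <= CU * (re_const CV + 2) * t) by (repeat apply Rmult_le_pos; lra).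
  assert (0 <= CU * t) by (apply Rmult_le_pos; lra).
  assert (0 <= CU * (re_const CV + 2) * sqrt (k + eta)) by (repeat apply Rmult_le_pos; lra).
  assert (0 <= CU * CU * sqrt (k + eta)) by (repeat apply Rmult_le_pos; lra).
  unfold im_m_const. fold CU. lra.
Qed.

(* If [Im xi >= t^2], [mom2 (xi) = Im m / Im xi]; otherwise [mom2 (xi) < 1 / t]. *)
Lemma mom2_xi_le z : 0 < Im z <= 10 -> -3/4 <= Re z <= 3/4 ->
  mom2 N V (Re (xi t m z)) (Im (xi t m z)) <=
    2 * (im_m_const CV + 1) * (t + sqrt (Rabs (Re z - Em) + Im z)) / (t * t + Im (xi t m z)).
Proof.
  intros Hz1 Hz2. pose proof (im_m_le z Hz1 Hz2) as HM'.
  destruct (edge_constants_bounds CV HCV) as (CP1 & CP2 & CP3).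
  destruct (subord_facts z Hz1 Hz2) as (Ha & Hb & HI & HM & EM & _).
  set (a := Re (xi t m z)) in *. set (b := Im (xi t m z)) in *. set (M := Im (m z)) in *.
  set (sq := sqrt (Rabs (Re z - Em) + Im z)) in *. assert (Hsq : 0 <= sq) by apply sqrt_pos.
  assert (Htt : 0 < t * t) by (apply Rmult_lt_0_compat; lra).
  pose proof (im_m_const_ge0 CV HCV) as HK6.
  assert (0 <= mom2 N V a b) by (apply mom2_nonneg; auto; lra).
  apply Rmult_le_reg_r with (t * t + b); [lra|]. unfold Rdiv. rewrite Rmult_assoc, Rinv_l, Rmult_1_r by lra.
  rewrite imS_mom2 in EM.
  destruct (Rle_lt_dec (t * t) b).
  - assert (mom2 N V a b * (t * t + b) <= 2 * M) by (rewrite EM; nra).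
    assert (M <= (im_m_const CV + 1) * (t + sq)) by nra. lra.
  - assert (mom2 N V a b * (t * t + b) <= 2 * t) by nra.
    assert (2 * t <= 2 * (im_m_const CV + 1) * (t + sq)) by nra. lra.
Qed.

Lemma moment_xi_le z p : 0 < Im z <= 10 -> -3/4 <= Re z <= 3/4 -> 2 <= p ->
  moment N V (xi t m z) p <=
  2 * (im_m_const CV + 1) / Rpower (sep CV) (p - 2) * (t + sqrt (Rabs (Re z - Em) + Im z))
    / Rpower (t * t + Im (xi t m z)) (p - 1).
Proof.
  intros Hz1 Hz2 Hp. pose proof (mom2_xi_le z Hz1 Hz2) as HI2.
  destruct (subord_facts z Hz1 Hz2) as (Ha & Hb & _).
  set (a := Re (xi t m z)) in *. set (b := Im (xi t m z)) in *.
  set (sq := sqrt (Rabs (Re z - Em) + Im z)) in *. assert (Hsq : 0 <= sq) by apply sqrt_pos.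
  assert (Htt : 0 < t * t) by (apply Rmult_lt_0_compat; lra).
  pose proof (sep_pos CV) as Hc1.
  set (rho := sep CV * (t * t + b)). assert (Hrho : 0 < rho) by (unfold rho; apply Rmult_lt_0_compat; lra).
  set (X := / Rpower rho (p - 2)).
  assert (HX : 0 < X) by (unfold X; apply Rinv_0_lt_compat; unfold Rpower; apply exp_pos).
  assert (Hm1 : moment N V (xi t m z) p <= mom2 N V a b * X).
  { unfold moment. fold (avg N (fun i => / Rpower (Cabs (Csub (RtoC (V i)) (xi t m z))) p)).
    unfold mom2. rewrite Rmult_comm, <- avg_scal. apply avg_le; auto. intros i Hi. rewrite Cabs_sub_dist2. fold a b.
    pose proof (sep_xi z i Hz1 Hz2 Hi) as P1. fold a b rho in P1.
    pose proof (Rinv_Rpower_2_plus_le (sqrt (dist2 (V i) a b)) rho (p - 2) ltac:(lra) ltac:(lra)) as R.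
    replace (2 + (p - 2)) with p in R by ring. rewrite sqrt_sqrt in R by (left; apply dist2_pos; lra).
    fold X in R. lra. }
  assert (ERp : Rpower rho (p - 2) = Rpower (sep CV) (p - 2) * Rpower (t * t + b) (p - 2))
    by (unfold rho; rewrite Rpower_mult_distr; auto; lra).
  assert (ERq : Rpower (t * t + b) (p - 1) = Rpower (t * t + b) (p - 2) * (t * t + b)).
  { replace (p - 1) with ((p - 2) + 1) by ring. rewrite Rpower_plus, Rpower_1 by lra. reflexivity. }
  assert (0 < Rpower (sep CV) (p - 2)) by (unfold Rpower; apply exp_pos).
  assert (0 < Rpower (t * t + b) (p - 2)) by (unfold Rpower; apply exp_pos).
  eapply Rle_trans; [apply Hm1|]. unfold X. rewrite ERp, ERq.
  eapply Rle_trans; [apply Rmult_le_compat_r; [left; apply Rinv_0_lt_compat; nra | apply HI2]|].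
  right. field. repeat split; lra.
Qed.

Lemma fc_estimates z p : 0 < Im z <= 10 -> -3/4 <= Re z <= 3/4 -> Re z >= Em - t * t -> 2 <= p ->
  (forall i, (i < N)%nat ->
     Cabs (Csub (RtoC (V i)) (xi t m z)) >= sep CV * (t * t + Im z + t * Im (m z))) /\
  moment N V (xi t m z) p <=
    fc_const CV p * (t + sqrt (Rabs (Re z - Em) + Im z)) / Rpower (t * t + Im (xi t m z)) (p - 1) /\
  t + sqrt (Rabs (Re z - Em) + Im z) <= fc_const CV p * (t + Im (m z)).
Proof.
  intros Hz1 Hz2 Hz Hp.
  destruct (subord_facts z Hz1 Hz2) as (_ & _ & _ & HM & _ & _ & _ & EB).
  set (Km := 2 * (im_m_const CV + 1) / Rpower (sep CV) (p - 2)).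
  assert (HKm : 0 <= Km).
  { pose proof (im_m_const_ge0 CV HCV). unfold Km, Rdiv. apply Rmult_le_pos; [lra|].
    left; apply Rinv_0_lt_compat; unfold Rpower; apply exp_pos. }
  pose proof (kappa_const_ge1 CV HCV).
  assert (0 <= t + sqrt (Rabs (Re z - Em) + Im z)) by (pose proof (sqrt_pos (Rabs (Re z - Em) + Im z)); lra).
  unfold fc_const. fold Km. split; [|split].
  - intros i Hi. rewrite Cabs_sub_dist2.
    replace (t * t + Im z + t * Im (m z)) with (t * t + Im (xi t m z)) by (rewrite EB; ring).
    apply Rle_ge. now apply sep_xi.
  - eapply Rle_trans; [apply (moment_xi_le z p Hz1 Hz2 Hp)|]. fold Km.
    assert (0 < Rpower (t * t + Im (xi t m z)) (p - 1)) by (unfold Rpower; apply exp_pos).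
    unfold Rdiv. apply Rmult_le_compat_r; [left; apply Rinv_0_lt_compat; lra|].
    apply Rmult_le_compat_r; lra.
  - eapply Rle_trans; [apply (kappa_le z Hz1 Hz2 Hz)|]. apply Rmult_le_compat_r; lra.
Qed.

End Edge.
End Subordination.
End SmallTime.
End Regularity.

Lemma Rpower_INR_neg_le_eventually al eps : 0 < al -> 0 < eps ->
  exists N0 : nat, forall N : nat, (N0 <= N)%nat -> (1 <= N)%nat -> Rpower (INR N) (- al) <= eps.
Proof.
  intros Hal Heps. set (B := Rpower (/ eps) (/ al)).
  assert (HB : 0 < B) by (unfold B, Rpower; apply exp_pos).
  destruct (INR_archimed 1 B ltac:(lra)) as [N0 HN0]. exists N0. intros N HN HN1.
  assert (INR N0 <= INR N) by (apply le_INR; lia).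
  assert (0 < INR N) by (apply lt_0_INR; lia).
  rewrite Rpower_Ropp.
  assert (Rpower B al <= Rpower (INR N) al) by (apply Rle_Rpower_l; lra).
  unfold B in H1. rewrite Rpower_mult in H1. replace (/ al * al) with 1 in H1 by (field; lra).
  rewrite Rpower_1 in H1 by (apply Rinv_0_lt_compat; lra).
  rewrite <- (Rinv_inv eps). apply Rinv_le_contravar; [apply Rinv_0_lt_compat; lra | exact H1].
Qed.

(* [etas = N^(-(phis - 2 al)) t^2] with [phis - 2 al > 0], where [t = N^(-al)]. *)
Lemma scales_eventually_small CV phis omega : 0 < CV -> 0 < 1/3 - omega < phis / 2 ->
  exists N0 : nat, forall N : nat, (N0 <= N)%nat -> (1 <= N)%nat ->
    Rpower (INR N) (omega - 1/3) <= t_max CV /\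
    (16 * CV * CV + 4) * Rpower (INR N) (- phis) <= Rpower (INR N) (omega - 1/3) ^ 2.
Proof.
  intros HCV Hom. set (al := 1/3 - omega). set (be := phis - 2 * al).
  assert (Htmax : 0 < t_max CV).
  { unfold t_max. destruct (edge_constants_bounds CV HCV) as (? & ? & ?). apply Rinv_0_lt_compat. lra. }
  assert (HC : 0 < 16 * CV * CV + 4) by (pose proof (Rsqr_ge0 CV); lra).
  destruct (Rpower_INR_neg_le_eventually al (t_max CV) ltac:(unfold al; lra) Htmax) as [N1 HN1].
  destruct (Rpower_INR_neg_le_eventually be (/ (16 * CV * CV + 4)) ltac:(unfold be, al; lra)
              ltac:(apply Rinv_0_lt_compat; lra)) as [N2 HN2].
  exists (N1 + N2)%nat. intros N HN HN1'.
  assert (Ht : Rpower (INR N) (omega - 1/3) = Rpower (INR N) (- al)) by (unfold al; f_equal; ring).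
  split; [rewrite Ht; apply HN1; lia|].
  assert (Hetas : Rpower (INR N) (- phis) = Rpower (INR N) (- be) * Rpower (INR N) (- al) ^ 2).
  { simpl. rewrite Rmult_1_r, <- !Rpower_plus. f_equal. unfold be. ring. }
  rewrite Ht, Hetas. specialize (HN2 N ltac:(lia) HN1').
  assert (0 <= Rpower (INR N) (- al) ^ 2) by (apply pow2_ge_0).
  assert ((16 * CV * CV + 4) * Rpower (INR N) (- be) <= 1).
  { replace 1 with ((16 * CV * CV + 4) * / (16 * CV * CV + 4)) by (field; lra).
    apply Rmult_le_compat_l; lra. }
  rewrite <- Rmult_assoc. apply Rle_trans with (1 * Rpower (INR N) (- al) ^ 2); [|lra].
  apply Rmult_le_compat_r; lra.
Qed.

Lemma in_D_box N sigma Em z : -3/4 <= Em <= 3/4 -> in_D N sigma Em z ->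
  0 < Im z <= 10 /\ -3/4 <= Re z <= 3/4.
Proof.
  intros HEm [(H1 & H2 & _) | (H1 & H2)]; [lra|].
  assert (0 < Rpower (INR N) (sigma - 2/3)) by (unfold Rpower; apply exp_pos). lra.
Qed.

Theorem lemma7p5 :
  forall (CV phis omega sigma p : R),
    0 < CV -> 0 < phis <= 2/3 -> 0 < 1/3 - omega < phis / 2 ->
    0 < sigma -> 2 <= p ->
  exists (c K : R) (N0 : nat), 0 < c /\ 0 < K /\
  forall (N : nat) (V : nat -> R) (m : Cx -> Cx) (Em : R),
    (N0 <= N)%nat -> (1 <= N)%nat ->
    let etas := Rpower (INR N) (- phis) in
    let t := Rpower (INR N) (omega - 1/3) in
    (forall i j, (i <= j < N)%nat -> V i <= V j) ->
    eta_regular N V etas CV ->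
    is_mfc N V t m ->
    is_left_edge m Em ->
    forall z : Cx,
      in_D N sigma Em z -> Re z >= Em - t ^ 2 ->
      let kappa := Rabs (Re z - Em) in
      (forall i, (i < N)%nat ->
         Cabs (Csub (RtoC (V i)) (xi t m z)) >= c * (t ^ 2 + Im z + t * Im (m z))) /\
      moment N V (xi t m z) p <=
         K * (t + sqrt (kappa + Im z)) / Rpower (t ^ 2 + Im (xi t m z)) (p - 1) /\
      t + sqrt (kappa + Im z) <= K * (t + Im (m z)).
Proof.
  intros CV phis omega sigma p HCV Hphis Hom Hsig Hp.
  destruct (scales_eventually_small CV phis omega HCV Hom) as [N0 HN0].
  assert (HK : 0 < fc_const CV p).
  { pose proof (kappa_const_ge1 CV HCV). pose proof (im_m_const_ge0 CV HCV).
    assert (0 < Rpower (sep CV) (p - 2)) by (unfold Rpower; apply exp_pos).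
    unfold fc_const, Rdiv. assert (0 <= 2 * (im_m_const CV + 1) * / Rpower (sep CV) (p - 2))
      by (apply Rmult_le_pos; [lra | left; apply Rinv_0_lt_compat; lra]). lra. }
  exists (sep CV), (fc_const CV p), N0. split; [apply sep_pos|]. split; [exact HK|].
  intros N V m Em HN HN1 etas t _ Hreg Hm Hedge z HD Hz kappa.
  destruct (HN0 N HN HN1) as [Hts Hsmall]. fold t etas in Hts, Hsmall.
  replace (t ^ 2) with (t * t) in * by ring.
  assert (He : 0 < etas) by (unfold etas, Rpower; apply exp_pos).
  assert (Ht : 0 < t) by (unfold t, Rpower; apply exp_pos).
  destruct (edge_bounds N V CV etas HN1 HCV Hreg He t Ht Hts Hsmall m Hm Em Hedge) as [_ HEm].
  destruct (in_D_box N sigma Em z HEm HD) as [Hz1 Hz2].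
  exact (fc_estimates N V CV etas HN1 HCV Hreg He t Ht Hts Hsmall m Hm Em Hedge z p Hz1 Hz2 Hz Hp).
Qed.
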